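(* Let $0<\epsilon\le\beta<\tfrac12$ and $b>0$. Let $\widehat Q_2$ be the estimator $$\widehat Q_2=\frac1n\sum_{i=1}^n\big[(X_i^2-\sigma^2\tau_n)_+-\mu_0\big]\big[(Y_i^2-\sigma^2\tau_n)_+-\theta_0\big],\qquad \mu_0=\theta_0:=E_0(Y_i^2-\sigma^2\tau_n)_+,$$ with threshold $\tau_n=\log n$, where $E_0$ denotes expectation when $Y_i\sim N(0,\sigma^2)$. Then there is a constant $C>0$ (depending only on $\beta,\epsilon,b,\sigma$) such that for all sufficiently large $n$, $$\sup_{(\mu,\theta)\in\Omega(\beta,\epsilon,b)}E_{(\mu,\theta)}\big(\widehat Q_2-Q(\mu,\theta)\big)^2\le C\Big[n^{2\epsilon+4b-2}(\log n)^2+n^{\epsilon+6b-2}\Big].$$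
   Context: Gaussian two-sequence model: one observes $X_i=\mu_i+\sigma z_i'$, $Y_i=\theta_i+\sigma z_i$, $i=1,\dots,n$, where $z_1',\dots,z_n',z_1,\dots,z_n$ are i.i.d. $N(0,1)$ and the noise level $\sigma>0$ is known. The target functional is $Q(\mu,\theta)=\frac1n\sum_{i=1}^n\mu_i^2\theta_i^2$. For $x\in\mathbb R$, $x_+=\max\{x,0\}$. For vectors, $\|\mu\|_0$ is the number of nonzero entries, $\|\mu\|_\infty=\max_i|\mu_i|$, and $\mu\star\theta=(\mu_1\theta_1,\dots,\mu_n\theta_n)$. With $k_n=n^\beta$, $q_n=n^\epsilon$, $s_n=n^b$ (where $0<\epsilon\le\beta<\tfrac12$, $b\in\mathbb R$), the parameter space is $$\Omega(\beta,\epsilon,b)=\{(\mu,\theta)\in\mathbb R^n\times\mathbb R^n:\|\mu\|_0\le k_n,\|\mu\|_\infty\le s_n,\|\theta\|_0\le k_n,\|\theta\|_\infty\le s_n,\|\mu\star\theta\|_0\le q_n\}.$$ *)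

From Stdlib Require Import Reals Lra List.
Import ListNotations.
Open Scope R_scope.

Definition pos_part (x : R) : R := Rmax x 0.

Definition rsum (n : nat) (f : nat -> R) : R :=
  fold_right Rplus 0 (map f (seq 0 n)).

Definition nnz (n : nat) (v : nat -> R) : nat :=
  length (filter (fun i => if Req_EM_T (v i) 0 then false else true) (seq 0 n)).

Definition phi (z : R) : R := exp (- (z * z) / 2) / sqrt (2 * PI).

Definition improper_int (f : R -> R) (L : R) : Prop :=
  forall eps, 0 < eps -> exists A, forall a b, a <= - A -> A <= b ->
    exists pr : Riemann_integrable f a b, Rabs (RiemannInt pr - L) < eps.

Definition upd (z : nat -> R) (k : nat) (t : R) : nat -> R :=
  fun i => if Nat.eqb i k then t else z i.

(* gauss_exp m F L : E[F(z)] = L where z_0, ..., z_{m-1} are i.i.d. N(0,1)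
   (coordinates >= m are set to 0), computed as an iterated improper
   Riemann integral against the standard normal density. *)
Fixpoint gauss_exp (m : nat) (F : (nat -> R) -> R) (L : R) : Prop :=
  match m with
  | O => L = F (fun _ => 0)
  | S m' => exists g : R -> R,
      (forall t, gauss_exp m' (fun z => F (upd z m' t)) (g t)) /\
      improper_int (fun t => phi t * g t) L
  end.

(* Parameter space Omega(beta, eps, b) with k_n = n^beta, q_n = n^eps, s_n = n^b *)
Definition Omega (n : nat) (beta eps b : R) (mu theta : nat -> R) : Prop :=
  INR (nnz n mu) <= Rpower (INR n) beta /\
  (forall i, (i < n)%nat -> Rabs (mu i) <= Rpower (INR n) b) /\
  INR (nnz n theta) <= Rpower (INR n) beta /\
  (forall i, (i < n)%nat -> Rabs (theta i) <= Rpower (INR n) b) /\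
  INR (nnz n (fun i => mu i * theta i)) <= Rpower (INR n) eps.

Definition Qfun (n : nat) (mu theta : nat -> R) : R :=
  / INR n * rsum n (fun i => mu i ^ 2 * theta i ^ 2).

Definition tau (n : nat) : R := ln (INR n).

Definition Qhat2 (n : nat) (sigma mu0 theta0 : R) (X Y : nat -> R) : R :=
  / INR n * rsum n (fun i =>
    (pos_part (X i ^ 2 - sigma ^ 2 * tau n) - mu0) *
    (pos_part (Y i ^ 2 - sigma ^ 2 * tau n) - theta0)).

(* Observations from the noise vector z : X_i = mu_i + sigma z'_i with
   z'_i = z_i, and Y_i = theta_i + sigma z_i with z_i = z_(n+i). *)
Definition obsX (n : nat) (sigma : R) (mu : nat -> R) (z : nat -> R) : nat -> R :=
  fun i => mu i + sigma * z i.
Definition obsY (n : nat) (sigma : R) (theta : nat -> R) (z : nat -> R) : nat -> R :=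
  fun i => theta i + sigma * z (n + i)%nat.

(* The estimator averages products [A_i B_i] of independent one-coordinate statistics
   [A_i = (X_i ^ 2 - sigma ^ 2 log n)_+ - mu0], so its mean squared error is exactly
   [bias ^ 2 + sum_i Var (A_i B_i) / n ^ 2].  Since [|E A_i - mu_i ^ 2| <= sigma ^ 2 (1 + log n)]
   and [E A_i = 0] when [mu_i = 0], the bias involves only the [q_n] coordinates where
   [mu_i theta_i <> 0] and is [O (q_n s_n ^ 2 log n / n)].  A Chernoff bound gives
   [Var A_i = O (n ^ (- (1 - eps) / 2))] when [mu_i = 0]; with the polynomial bound on the
   variance elsewhere and the sparsity [k_n] of [mu] and [theta], this controls the variance term. *)

From Stdlib Require Import Reals Lra Lia List ClassicalEpsilon.
From Coquelicot Require Import Coquelicot.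
Open Scope R_scope.

Lemma continuous_of_ex_derive (f : R -> R) x : ex_derive f x -> continuous f x.
Proof. apply (ex_derive_continuous (K:=R_AbsRing) (V:=R_NormedModule)). Qed.

Lemma ex_RInt_of_continuous (f : R -> R) a b : (forall z, continuous f z) -> ex_RInt f a b.
Proof.
  intro H. apply (ex_RInt_continuous (V:=R_CompleteNormedModule)). intros; apply H.
Qed.

(* Equalities produced by Coquelicot live in carriers such as [R_AbsRing]; [toR] restates
   the goal at type [R] so that [ring], [field] and [lra] apply. *)
Ltac toR := lazymatch goal with |- ?a = ?b => change (@eq R a b) end.

Lemma one_plus_sq_pos u : 0 < 1 + u * u.
Proof. nra. Qed.

Lemma sqrt2pi_pos : 0 < sqrt (2 * PI).
Proof. apply sqrt_lt_R0. pose proof PI_RGT_0; lra. Qed.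

Lemma exp_le_exp_of_le a c : a <= c -> exp a <= exp c.
Proof. intros H. destruct (Req_dec a c). subst; lra. apply Rlt_le, exp_increasing; lra. Qed.

Lemma exp_nat_le_inv (N : nat) : exp (- INR N) <= / (INR N + 1).
Proof.
  rewrite exp_Ropp. pose proof (pos_INR N). apply Rinv_le_contravar. lra.
  destruct (Req_dec (INR N) 0) as [E|E]. rewrite E, exp_0. lra.
  pose proof (exp_ineq1 (INR N) E). lra.
Qed.

Lemma exp_nat_small K eps : 0 <= K -> 0 < eps -> exists N : nat, 2 * K * exp (- INR N) < eps.
Proof.
  intros HK He. destruct (INR_unbounded (2 * K / eps)) as [N HN]. exists N.
  pose proof (exp_nat_le_inv N). pose proof (pos_INR N).
  apply Rle_lt_trans with (2 * K * / (INR N + 1)). apply Rmult_le_compat_l; lra.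
  apply Rmult_lt_reg_r with (INR N + 1). lra. rewrite Rmult_assoc, Rinv_l by lra.
  apply Rmult_lt_reg_r with (/ eps). apply Rinv_0_lt_compat; lra.
  replace (eps * (INR N + 1) * / eps) with (INR N + 1) by (field; lra). unfold Rdiv in HN. lra.
Qed.

Lemma exp_ge_sq u : 0 <= u -> (1 + u / 2) ^ 2 <= exp u.
Proof.
  intros. replace u with (u / 2 + u / 2) at 2 by field. rewrite exp_plus.
  assert (1 + u / 2 <= exp (u / 2)).
  { destruct (Req_dec u 0). subst. replace (0 / 2) with 0 by field. rewrite exp_0. lra.
    apply Rlt_le, exp_ineq1. lra. }
  simpl. nra.
Qed.

(** * The Gaussian integral *)

(* With [G x = RInt egauss 0 x] and [H x = RInt (feynman_integrand x) 0 1], the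
   function [G x ^ 2 + H x] has derivative zero and equals [atan 1 = PI / 4] at 0;
   since [0 <= H x <= exp (- x * x)], this forces [G x -> sqrt PI / 2]. *)

Definition egauss (t : R) : R := exp (- (t * t)).
Definition gauss_int (x : R) : R := RInt egauss 0 x.
Definition feynman_integrand (x u : R) : R := exp (- (x * x) * (1 + u * u)) / (1 + u * u).
Definition feynman_int (x : R) : R := RInt (feynman_integrand x) 0 1.

Lemma egauss_continuous t : continuous egauss t.
Proof. apply continuous_of_ex_derive. unfold egauss. auto_derive. auto. Qed.

Lemma ex_RInt_egauss a b : ex_RInt egauss a b.
Proof. apply ex_RInt_of_continuous, egauss_continuous. Qed.

Lemma gauss_int_derive x : is_derive gauss_int x (egauss x).
Proof.
  apply (is_derive_RInt egauss gauss_int 0).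
  - apply filter_forall; intro y. apply (RInt_correct (V:=R_CompleteNormedModule)), ex_RInt_egauss.
  - apply egauss_continuous.
Qed.

Lemma feynman_integrand_continuous x u : continuous (feynman_integrand x) u.
Proof.
  apply continuous_of_ex_derive. unfold feynman_integrand. auto_derive.
  pose proof (one_plus_sq_pos u); lra.
Qed.

Lemma Derive_feynman_integrand u v :
  Derive (fun z => feynman_integrand z v) u = -2 * u * exp (- (u * u) * (1 + v * v)).
Proof.
  apply is_derive_unique. unfold feynman_integrand. auto_derive.
  - pose proof (one_plus_sq_pos v); lra.
  - pose proof (one_plus_sq_pos v); field; lra.
Qed.

Lemma feynman_int_derive x : is_derive feynman_int x (-2 * egauss x * gauss_int x).
Proof.
  unfold feynman_int.
  replace (-2 * egauss x * gauss_int x)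
    with (RInt (fun t => Derive (fun u => feynman_integrand u t) x) 0 1).
  - apply (is_derive_RInt_param feynman_integrand 0 1 x).
    + apply filter_forall; intros y t _. unfold feynman_integrand. auto_derive.
      pose proof (one_plus_sq_pos t); lra.
    + intros t _.
      apply continuity_2d_pt_ext with (f := fun u v => -2 * u * exp (- (u * u) * (1 + v * v))).
      { intros; rewrite Derive_feynman_integrand; reflexivity. }
      apply continuity_2d_pt_mult.
      * apply continuity_2d_pt_mult. apply continuity_2d_pt_const. apply continuity_2d_pt_id1.
      * apply continuity_1d_2d_pt_comp with (f := exp) (g := fun u v => - (u * u) * (1 + v * v)).
        { apply derivable_continuous_pt, derivable_pt_exp. }
        apply continuity_2d_pt_mult.
        -- apply continuity_2d_pt_opp. apply continuity_2d_pt_mult; apply continuity_2d_pt_id1.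
        -- apply continuity_2d_pt_plus. apply continuity_2d_pt_const.
           apply continuity_2d_pt_mult; apply continuity_2d_pt_id2.
    + apply filter_forall; intro y. apply ex_RInt_of_continuous, feynman_integrand_continuous.
  - rewrite (RInt_ext _ (fun t => (-2 * egauss x) * (x * egauss (x * t + 0)))).
    2:{ intros t _. rewrite Derive_feynman_integrand. unfold egauss. rewrite Rplus_0_r.
        replace (- (x * x) * (1 + t * t)) with (- (x * x) + - (x * t * (x * t))) by ring.
        rewrite exp_plus. toR. ring. }
    rewrite (RInt_scal (V:=R_CompleteNormedModule)).
    2:{ apply ex_RInt_of_continuous; intro z. apply continuous_of_ex_derive.
        unfold egauss; auto_derive; auto. }
    unfold scal; simpl; unfold mult; simpl. toR.
    assert (E := RInt_comp_lin (V:=R_CompleteNormedModule) egauss x 0 0 1).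
    unfold scal in E; simpl in E; unfold mult in E; simpl in E.
    rewrite E by apply ex_RInt_egauss. unfold gauss_int. f_equal; f_equal; toR; ring.
Qed.

Lemma is_derive_zero_const (f : R -> R) : (forall x, is_derive f x 0) -> forall x y, f x = f y.
Proof.
  intros Hd.
  set (pr := fun x => exist (fun l => derivable_pt_lim f x l) 0
                        (proj1 (is_derive_Reals f x 0) (Hd x)) : derivable_pt f x).
  intros x y; apply (null_derivative_1 f pr (fun x => eq_refl)).
Qed.

Lemma feynman_int_0 : feynman_int 0 = PI / 4.
Proof.
  unfold feynman_int. rewrite <- atan_1.
  replace (atan 1) with (minus (atan 1) (atan 0)).
  2:{ rewrite atan_0. unfold minus, plus, opp; simpl. ring. }
  apply (is_RInt_unique (V:=R_CompleteNormedModule)).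
  apply (is_RInt_derive (V:=R_CompleteNormedModule)).
  - intros x _. apply is_derive_Reals.
    replace (feynman_integrand 0 x) with (/ (1 + x ^ 2)) by
      (unfold feynman_integrand; replace (- (0 * 0) * (1 + x * x)) with 0 by ring;
       rewrite exp_0; pose proof (one_plus_sq_pos x); field; nra).
    apply derivable_pt_lim_atan.
  - intros; apply feynman_integrand_continuous.
Qed.

Lemma gauss_feynman_identity x : gauss_int x * gauss_int x + feynman_int x = PI / 4.
Proof.
  rewrite (is_derive_zero_const (fun x => gauss_int x * gauss_int x + feynman_int x)) with (y := 0).
  - assert (G0 : gauss_int 0 = 0) by apply (RInt_point (V:=R_CompleteNormedModule)).
    rewrite feynman_int_0, G0. ring.
  - intro y.
    replace 0 with (plus (egauss y * gauss_int y + gauss_int y * egauss y)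
                         (-2 * egauss y * gauss_int y)) by (unfold plus; simpl; ring).
    apply (is_derive_plus (K:=R_AbsRing) (V:=R_NormedModule)); [|apply feynman_int_derive].
    replace (egauss y * gauss_int y + gauss_int y * egauss y)
      with (plus (scal (egauss y) (gauss_int y)) (scal (gauss_int y) (egauss y)))
      by (unfold plus, scal; simpl; unfold mult; simpl; ring).
    apply (is_derive_mult gauss_int gauss_int); try apply gauss_int_derive.
    intros; unfold mult; simpl; ring.
Qed.

Lemma feynman_int_bounds x : 0 <= feynman_int x <= egauss x.
Proof.
  unfold feynman_int; split.
  - apply RInt_ge_0. lra. apply ex_RInt_of_continuous, feynman_integrand_continuous.
    intros u _. unfold feynman_integrand.
    pose proof (one_plus_sq_pos u). pose proof (exp_pos (- (x * x) * (1 + u * u))).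
    apply Rlt_le, Rdiv_lt_0_compat; lra.
  - apply Rle_trans with (RInt (fun _ => egauss x) 0 1).
    + apply RInt_le. lra. apply ex_RInt_of_continuous, feynman_integrand_continuous.
      apply ex_RInt_of_continuous; intro; apply continuous_const.
      intros u Hu. unfold feynman_integrand, egauss. pose proof (one_plus_sq_pos u).
      assert (exp (- (x * x) * (1 + u * u)) <= exp (- (x * x))) by (apply exp_le_exp_of_le; nra).
      pose proof (exp_pos (- (x * x) * (1 + u * u))).
      unfold Rdiv. apply Rle_trans with (exp (- (x * x) * (1 + u * u)) * 1); [|lra].
      apply Rmult_le_compat_l. lra. rewrite <- Rinv_1. apply Rinv_le_contravar; nra.
    + rewrite (RInt_const (V:=R_CompleteNormedModule)). unfold scal; simpl; unfold mult; simpl. lra.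
Qed.

Lemma gauss_int_nonneg x : 0 <= x -> 0 <= gauss_int x.
Proof.
  intros Hx. apply RInt_ge_0; auto. apply ex_RInt_egauss.
  intros; unfold egauss; apply Rlt_le, exp_pos.
Qed.

Lemma gauss_int_limit_error y : 0 <= y -> Rabs (gauss_int y - sqrt PI / 2) <= 2 * egauss y / sqrt PI.
Proof.
  intros Hy. pose proof (gauss_feynman_identity y). pose proof (feynman_int_bounds y).
  pose proof (gauss_int_nonneg y Hy).
  pose proof PI_RGT_0. assert (sp : 0 < sqrt PI) by (apply sqrt_lt_R0; lra).
  assert (sq : sqrt PI * sqrt PI = PI) by (apply sqrt_sqrt; lra).
  assert (E : (sqrt PI / 2 - gauss_int y) * (sqrt PI / 2 + gauss_int y) = feynman_int y) by nra.
  assert (0 <= sqrt PI / 2 - gauss_int y) by nra.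
  rewrite Rabs_minus_sym, Rabs_right by lra.
  apply Rle_trans with (feynman_int y / (sqrt PI / 2)).
  - apply Rmult_le_reg_r with (sqrt PI / 2). lra.
    replace (feynman_int y / (sqrt PI / 2) * (sqrt PI / 2)) with (feynman_int y) by (field; lra). nra.
  - replace (2 * egauss y / sqrt PI) with (egauss y / (sqrt PI / 2)) by (field; lra).
    unfold Rdiv. apply Rmult_le_compat_r. apply Rlt_le, Rinv_0_lt_compat; lra. lra.
Qed.

Lemma gauss_int_opp y : gauss_int (- y) = - gauss_int y.
Proof.
  assert (E := RInt_comp_lin (V:=R_CompleteNormedModule) egauss (-1) 0 0 y).
  unfold scal in E; simpl in E; unfold mult in E; simpl in E.
  unfold gauss_int. toR.
  replace (- y) with (-1 * y + 0) by ring. replace 0 with (-1 * 0 + 0) at 1 by ring.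
  rewrite <- E by apply ex_RInt_egauss.
  rewrite (RInt_ext (V:=R_CompleteNormedModule) _ (fun t => -1 * egauss t)).
  - rewrite (RInt_scal (V:=R_CompleteNormedModule)) by apply ex_RInt_egauss.
    unfold scal; simpl; unfold mult; simpl. toR. ring.
  - intros t _. unfold egauss. toR. f_equal. f_equal. ring.
Qed.

Lemma egauss_decreasing y Y : 0 <= Y <= y -> egauss y <= egauss Y.
Proof. intros. unfold egauss. apply exp_le_exp_of_le. nra. Qed.

Lemma egauss_lt_inv Y : 0 < Y -> egauss Y < / Y.
Proof.
  intros. unfold egauss. pose proof (exp_ineq1 (Y * Y)).
  assert (exp (Y * Y) > Y) by (assert (Y * Y <> 0) by nra; specialize (H0 H1); nra).
  rewrite exp_Ropp. apply Rinv_lt_contravar. nra. lra.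
Qed.

Lemma phi_pos t : 0 < phi t.
Proof. unfold phi. apply Rdiv_lt_0_compat. apply exp_pos. apply sqrt2pi_pos. Qed.

Lemma phi_continuous t : continuous phi t.
Proof. apply continuous_of_ex_derive. unfold phi. auto_derive. pose proof sqrt2pi_pos; lra. Qed.

Lemma ex_RInt_phi a b : ex_RInt phi a b.
Proof. apply ex_RInt_of_continuous, phi_continuous. Qed.

Lemma RInt_phi_from_0 x : RInt phi 0 x = gauss_int (x / sqrt 2) / sqrt PI.
Proof.
  pose proof PI_RGT_0. assert (sp : 0 < sqrt PI) by (apply sqrt_lt_R0; lra).
  assert (s2 : 0 < sqrt 2) by (apply sqrt_lt_R0; lra).
  assert (sq2 : sqrt 2 * sqrt 2 = 2) by (apply sqrt_sqrt; lra).
  assert (E := RInt_comp_lin (V:=R_CompleteNormedModule) egauss (/ sqrt 2) 0 0 x).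
  unfold scal in E; simpl in E; unfold mult in E; simpl in E.
  rewrite (RInt_ext (V:=R_CompleteNormedModule) phi
             (fun t => (/ sqrt PI) * (/ sqrt 2 * egauss (/ sqrt 2 * t + 0)))).
  - rewrite (RInt_scal (V:=R_CompleteNormedModule)).
    2:{ apply ex_RInt_of_continuous; intro z; apply continuous_of_ex_derive.
        unfold egauss; auto_derive; auto. }
    unfold scal; simpl; unfold mult; simpl.
    rewrite E by apply ex_RInt_egauss. unfold gauss_int. toR.
    replace (/ sqrt 2 * 0 + 0) with 0 by ring.
    replace (/ sqrt 2 * x + 0) with (x / sqrt 2) by (field; lra). field. lra.
  - intros t _. unfold phi, egauss. rewrite sqrt_mult by lra. toR.
    replace (- ((/ sqrt 2 * t + 0) * (/ sqrt 2 * t + 0))) with (- (t * t) / 2).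
    + field. lra.
    + replace ((/ sqrt 2 * t + 0) * (/ sqrt 2 * t + 0)) with ((t * t) / (sqrt 2 * sqrt 2))
        by (field; lra).
      rewrite sq2. field.
Qed.

Lemma RInt_phi a b : RInt phi a b = (gauss_int (b / sqrt 2) + gauss_int (- a / sqrt 2)) / sqrt PI.
Proof.
  assert (Ch := RInt_Chasles (V:=R_CompleteNormedModule) phi 0 a b
                  (ex_RInt_phi _ _) (ex_RInt_phi _ _)).
  unfold plus in Ch; simpl in Ch.
  replace (RInt phi a b) with (RInt phi 0 b - RInt phi 0 a) by (toR; lra).
  rewrite !RInt_phi_from_0.
  replace (- a / sqrt 2) with (- (a / sqrt 2)) by (unfold Rdiv; ring). rewrite gauss_int_opp.
  pose proof PI_RGT_0. assert (0 < sqrt PI) by (apply sqrt_lt_R0; lra). toR. field. lra.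
Qed.

(** * Improper integrals over the real line *)

Definition is_improper (f : R -> R) (L : R) : Prop :=
  forall eps, 0 < eps -> exists A, forall a b, a <= - A -> A <= b ->
    ex_RInt f a b /\ Rabs (RInt f a b - L) < eps.

Lemma is_improper_of_improper_int f L : improper_int f L -> is_improper f L.
Proof.
  intros H eps He. destruct (H eps He) as [A HA]. exists A. intros a b Ha Hb.
  destruct (HA a b Ha Hb) as [pr r]. split. apply ex_RInt_Reals_1; auto.
  rewrite (RInt_Reals f a b pr). auto.
Qed.

Lemma improper_int_of_is_improper f L : is_improper f L -> improper_int f L.
Proof.
  intros H eps He. destruct (H eps He) as [A HA]. exists A. intros a b Ha Hb.
  destruct (HA a b Ha Hb) as [e r]. exists (ex_RInt_Reals_0 f a b e).
  rewrite <- RInt_Reals. auto.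
Qed.

Lemma is_improper_ext f g L : (forall x, f x = g x) -> is_improper f L -> is_improper g L.
Proof.
  intros E H eps He. destruct (H eps He) as [A HA]. exists A. intros a b Ha Hb.
  destruct (HA a b Ha Hb) as [h1 h2]. split.
  - apply ex_RInt_ext with f; auto.
  - rewrite (RInt_ext (V:=R_CompleteNormedModule) g f); auto.
Qed.

Lemma is_improper_plus f g L1 L2 :
  is_improper f L1 -> is_improper g L2 -> is_improper (fun x => f x + g x) (L1 + L2).
Proof.
  intros H1 H2 eps He.
  destruct (H1 (eps / 2)) as [A1 HA1]; [lra|]. destruct (H2 (eps / 2)) as [A2 HA2]; [lra|].
  exists (Rmax A1 A2). intros a b Ha Hb.
  pose proof (Rmax_l A1 A2). pose proof (Rmax_r A1 A2).
  destruct (HA1 a b) as [e1 r1]; try lra. destruct (HA2 a b) as [e2 r2]; try lra.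
  split.
  - apply (ex_RInt_plus (V:=R_NormedModule) f g); auto.
  - rewrite (RInt_plus (V:=R_CompleteNormedModule) f g) by auto. unfold plus; simpl.
    replace (RInt f a b + RInt g a b - (L1 + L2)) with ((RInt f a b - L1) + (RInt g a b - L2))
      by ring.
    eapply Rle_lt_trans. apply Rabs_triang. lra.
Qed.

Lemma is_improper_scal f c L : is_improper f L -> is_improper (fun x => c * f x) (c * L).
Proof.
  intros H eps He. destruct (H (eps / (Rabs c + 1))) as [A HA].
  { apply Rdiv_lt_0_compat. lra. pose proof (Rabs_pos c); lra. }
  exists A. intros a b Ha Hb. destruct (HA a b Ha Hb) as [e r]. split.
  - apply (ex_RInt_scal (V:=R_NormedModule) f); auto.
  - rewrite (RInt_scal (V:=R_CompleteNormedModule) f) by auto.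
    unfold scal; simpl; unfold mult; simpl.
    replace (c * RInt f a b - c * L) with (c * (RInt f a b - L)) by ring.
    rewrite Rabs_mult. pose proof (Rabs_pos c). pose proof (Rabs_pos (RInt f a b - L)).
    apply Rle_lt_trans with ((Rabs c + 1) * Rabs (RInt f a b - L)). nra.
    apply Rmult_lt_reg_l with (/ (Rabs c + 1)). apply Rinv_0_lt_compat; lra.
    rewrite <- Rmult_assoc, Rinv_l by lra.
    replace (/ (Rabs c + 1) * eps) with (eps / (Rabs c + 1)) by (field; lra). lra.
Qed.

Lemma is_improper_le f g L1 L2 :
  is_improper f L1 -> is_improper g L2 -> (forall x, f x <= g x) -> L1 <= L2.
Proof.
  intros H1 H2 Hle. destruct (Rle_lt_dec L1 L2) as [|Hlt]; auto. exfalso.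
  destruct (H1 ((L1 - L2) / 2)) as [A1 HA1]; [lra|].
  destruct (H2 ((L1 - L2) / 2)) as [A2 HA2]; [lra|].
  set (A := Rmax (Rabs A1) (Rabs A2)).
  assert (Rabs A1 <= A) by apply Rmax_l. assert (Rabs A2 <= A) by apply Rmax_r.
  pose proof (Rle_abs A1). pose proof (Rle_abs A2).
  pose proof (Rabs_pos A1). pose proof (Rabs_pos A2).
  destruct (HA1 (- A) A) as [x1 h1]; try lra. destruct (HA2 (- A) A) as [x2 h2]; try lra.
  assert (RInt f (- A) A <= RInt g (- A) A) by (apply RInt_le; auto; lra).
  apply Rabs_def2 in h1. apply Rabs_def2 in h2. lra.
Qed.

Lemma is_improper_unique f L1 L2 : is_improper f L1 -> is_improper f L2 -> L1 = L2.
Proof.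
  intros H1 H2. apply Rle_antisym; apply (is_improper_le f f); auto; intro; lra.
Qed.

Lemma is_improper_phi : is_improper phi 1.
Proof.
  pose proof PI_RGT_0. assert (sp : 0 < sqrt PI) by (apply sqrt_lt_R0; lra).
  assert (sq : sqrt PI * sqrt PI = PI) by (apply sqrt_sqrt; lra).
  assert (s2 : 0 < sqrt 2) by (apply sqrt_lt_R0; lra).
  intros eps He. set (Y := 4 / (PI * eps) + 1).
  assert (HY : 1 <= Y).
  { unfold Y. assert (0 < 4 / (PI * eps)) by (apply Rdiv_lt_0_compat; nra). lra. }
  exists (sqrt 2 * Y). intros a b Ha Hb. split; [apply ex_RInt_phi|].
  rewrite RInt_phi.
  set (yb := b / sqrt 2). set (ya := - a / sqrt 2).
  assert (Y <= yb).
  { apply Rmult_le_reg_r with (sqrt 2); auto. unfold yb, Rdiv.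
    rewrite Rmult_assoc, Rinv_l; lra. }
  assert (Y <= ya).
  { apply Rmult_le_reg_r with (sqrt 2); auto. unfold ya, Rdiv.
    rewrite Rmult_assoc, Rinv_l; lra. }
  assert (err : forall y, Y <= y -> Rabs (gauss_int y - sqrt PI / 2) <= 2 * egauss Y / sqrt PI).
  { intros y Hy. eapply Rle_trans. apply gauss_int_limit_error; lra.
    unfold Rdiv; apply Rmult_le_compat_r. apply Rlt_le, Rinv_0_lt_compat; lra.
    assert (egauss y <= egauss Y) by (apply egauss_decreasing; lra). lra. }
  replace ((gauss_int yb + gauss_int ya) / sqrt PI - 1) with
     (((gauss_int yb - sqrt PI / 2) + (gauss_int ya - sqrt PI / 2)) / sqrt PI) by (field; lra).
  unfold Rdiv at 1.
  rewrite Rabs_mult, (Rabs_right (/ sqrt PI)) by (apply Rle_ge, Rlt_le, Rinv_0_lt_compat; lra).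
  apply Rle_lt_trans with ((2 * egauss Y / sqrt PI + 2 * egauss Y / sqrt PI) * / sqrt PI).
  - apply Rmult_le_compat_r. apply Rlt_le, Rinv_0_lt_compat; lra.
    eapply Rle_trans. apply Rabs_triang. pose proof (err yb). pose proof (err ya). lra.
  - replace ((2 * egauss Y / sqrt PI + 2 * egauss Y / sqrt PI) * / sqrt PI)
      with (4 * egauss Y / (sqrt PI * sqrt PI)) by (field; lra).
    rewrite sq.
    assert (egauss Y < / Y) by (apply egauss_lt_inv; lra).
    assert (/ Y <= PI * eps / 4).
    { unfold Y. rewrite <- (Rinv_inv (PI * eps / 4)). apply Rinv_le_contravar.
      apply Rinv_0_lt_compat; nra.
      replace (/ (PI * eps / 4)) with (4 / (PI * eps)) by (field; lra). lra. }
    apply Rmult_lt_reg_r with (PI / 4). lra.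
    replace (4 * egauss Y / PI * (PI / 4)) with (egauss Y) by (field; lra). nra.
Qed.

Lemma is_improper_zero : is_improper (fun _ => 0) 0.
Proof.
  apply is_improper_ext with (fun x => 0 * phi x). intros; ring.
  assert (H := is_improper_scal _ 0 _ is_improper_phi). rewrite Rmult_0_l in H. exact H.
Qed.

Definition exp_neg_abs (x : R) : R := exp (- Rabs x).

Lemma exp_neg_abs_continuous x : continuous exp_neg_abs x.
Proof.
  apply (continuous_comp (fun x => - Rabs x) exp).
  - apply (continuous_opp (K:=R_AbsRing) (V:=R_NormedModule) Rabs). apply continuous_Rabs.
  - apply continuous_exp.
Qed.

Lemma RInt_exp_neg_abs_right c d : 0 <= c <= d -> RInt exp_neg_abs c d <= exp (- c).
Proof.
  intros Hc.
  rewrite (RInt_ext (V:=R_CompleteNormedModule) exp_neg_abs (fun x => exp (- x))).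
  - rewrite (is_RInt_unique (V:=R_CompleteNormedModule) _ c d (minus (- exp (- d)) (- exp (- c)))).
    + unfold minus, plus, opp; simpl. pose proof (exp_pos (- d)). lra.
    + apply (is_RInt_derive (V:=R_CompleteNormedModule) (fun x => - exp (- x))).
      * intros; auto_derive; auto. ring.
      * intros; apply continuous_of_ex_derive; auto_derive; auto.
  - intros x Hx. rewrite Rmin_left in Hx by lra. unfold exp_neg_abs. rewrite Rabs_right by lra. auto.
Qed.

Lemma RInt_exp_neg_abs_left c d : c <= d <= 0 -> RInt exp_neg_abs c d <= exp d.
Proof.
  intros Hc.
  rewrite (RInt_ext (V:=R_CompleteNormedModule) exp_neg_abs (fun x => exp x)).
  - rewrite (is_RInt_unique (V:=R_CompleteNormedModule) _ c d (minus (exp d) (exp c))).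
    + unfold minus, plus, opp; simpl. pose proof (exp_pos c). lra.
    + apply (is_RInt_derive (V:=R_CompleteNormedModule) exp).
      * intros; auto_derive; auto. ring.
      * intros; apply continuous_exp.
  - intros x Hx. rewrite Rmax_right in Hx by lra. unfold exp_neg_abs. rewrite Rabs_left by lra.
    f_equal; ring.
Qed.

Section ImproperExistence.
Variables (f : R -> R) (K : R).
Hypothesis f_continuous : forall x, continuous f x.
Hypothesis f_dominated : forall x, Rabs (f x) <= K * exp_neg_abs x.

Let ex_RInt_f a b : ex_RInt f a b.
Proof. apply ex_RInt_of_continuous; auto. Qed.

Let K_nonneg : 0 <= K.
Proof.
  pose proof (f_dominated 0). pose proof (Rabs_pos (f 0)).
  pose proof (exp_pos (- Rabs 0)). unfold exp_neg_abs in *. nra.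
Qed.

Let abs_RInt_dominated c d : c <= d -> Rabs (RInt f c d) <= K * RInt exp_neg_abs c d.
Proof.
  intros Hcd. eapply Rle_trans. apply abs_RInt_le; auto.
  rewrite <- (RInt_scal (V:=R_CompleteNormedModule)).
  2: apply ex_RInt_of_continuous, exp_neg_abs_continuous.
  apply RInt_le. exact Hcd.
  - apply ex_RInt_of_continuous. intro; apply (continuous_comp f Rabs). auto. apply continuous_Rabs.
  - apply ex_RInt_of_continuous. intro.
    apply (continuous_scal_r (K:=R_AbsRing) (V:=R_NormedModule) K exp_neg_abs).
    apply exp_neg_abs_continuous.
  - intros; apply f_dominated.
Qed.

Let RInt_window_change A a a' b b' : 0 <= A -> a' <= a <= - A -> A <= b <= b' ->
  Rabs (RInt f a' b' - RInt f a b) <= 2 * K * exp (- A).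
Proof.
  intros HA Ha Hb.
  assert (C1 := RInt_Chasles (V:=R_CompleteNormedModule) f a' a b' (ex_RInt_f _ _) (ex_RInt_f _ _)).
  assert (C2 := RInt_Chasles (V:=R_CompleteNormedModule) f a b b' (ex_RInt_f _ _) (ex_RInt_f _ _)).
  unfold plus in C1, C2; simpl in C1, C2.
  replace (RInt f a' b' - RInt f a b) with (RInt f a' a + RInt f b b') by (toR; lra).
  eapply Rle_trans. apply Rabs_triang.
  assert (Rabs (RInt f a' a) <= K * exp (- A)).
  { eapply Rle_trans. apply abs_RInt_dominated; lra. apply Rmult_le_compat_l; auto.
    eapply Rle_trans. apply RInt_exp_neg_abs_left; lra. apply exp_le_exp_of_le; lra. }
  assert (Rabs (RInt f b b') <= K * exp (- A)).
  { eapply Rle_trans. apply abs_RInt_dominated; lra. apply Rmult_le_compat_l; auto.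
    eapply Rle_trans. apply RInt_exp_neg_abs_right; lra. apply exp_le_exp_of_le; lra. }
  lra.
Qed.

(* The symmetric integrals over [-k, k] form a Cauchy sequence. *)
Lemma is_improper_exists_dominated : exists L, is_improper f L.
Proof.
  set (u := fun k : nat => RInt f (- INR k) (INR k)).
  assert (Hu : forall k k', (k <= k')%nat -> Rabs (u k' - u k) <= 2 * K * exp (- INR k)).
  { intros k k' Hk. apply RInt_window_change; pose proof (pos_INR k); pose proof (le_INR _ _ Hk); lra. }
  assert (mono : forall k N, (N <= k)%nat -> exp (- INR k) <= exp (- INR N)).
  { intros k N Hk. apply exp_le_exp_of_le. apply Ropp_le_contravar, le_INR; lia. }
  assert (Cc : Cauchy_crit u).
  { intros eps He. destruct (exp_nat_small K eps K_nonneg He) as [N HN]. exists N.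
    intros k l Hk Hl. unfold Rdist. destruct (Nat.le_ge_cases k l) as [H|H].
    - pose proof (Hu k l H). pose proof (mono k N Hk). rewrite Rabs_minus_sym. nra.
    - pose proof (Hu l k H). pose proof (mono l N Hl). nra. }
  destruct (Rcomplete.R_complete u Cc) as [L HL]. exists L.
  intros eps He. destruct (exp_nat_small K (eps / 3)) as [N HN]; [auto|lra|].
  exists (INR N). intros a b Ha Hb. split; [apply ex_RInt_f|].
  destruct (HL (eps / 3)) as [M HM]; [lra|].
  specialize (HM (max N M) (Nat.le_max_r _ _)). unfold Rdist in HM.
  pose proof (Hu N (max N M) (Nat.le_max_l _ _)).
  assert (Rabs (RInt f a b - u N) <= 2 * K * exp (- INR N))
    by (apply RInt_window_change; pose proof (pos_INR N); lra).
  replace (RInt f a b - L) with ((RInt f a b - u N) + (u N - u (max N M)) + (u (max N M) - L))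
    by ring.
  eapply Rle_lt_trans. eapply Rle_trans. apply Rabs_triang. apply Rplus_le_compat_r.
  apply Rabs_triang.
  rewrite (Rabs_minus_sym (u N)). lra.
Qed.

End ImproperExistence.

Lemma is_improper_derive_decay (P h : R -> R) M : 0 <= M ->
  (forall t, is_derive P t (h t)) -> (forall t, continuous h t) ->
  (forall t, Rabs (P t) <= M * exp_neg_abs t) -> is_improper h 0.
Proof.
  intros HM Hd hc Hb eps He. destruct (exp_nat_small M eps HM He) as [N HN].
  exists (INR N). intros a b Ha Hb'. pose proof (pos_INR N).
  split; [apply ex_RInt_of_continuous; auto|].
  rewrite (is_RInt_unique (V:=R_CompleteNormedModule) h a b (minus (P b) (P a))).
  2:{ apply (is_RInt_derive (V:=R_CompleteNormedModule)). intros; apply Hd. intros; apply hc. }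
  unfold minus, plus, opp; simpl. rewrite Rminus_0_r.
  assert (exp_neg_abs a <= exp (- INR N)).
  { unfold exp_neg_abs. rewrite Rabs_left1 by lra. apply exp_le_exp_of_le. lra. }
  assert (exp_neg_abs b <= exp (- INR N)).
  { unfold exp_neg_abs. rewrite Rabs_right by lra. apply exp_le_exp_of_le. lra. }
  eapply Rle_lt_trans. apply Rabs_triang. rewrite Rabs_Ropp.
  pose proof (Hb a). pose proof (Hb b).
  assert (M * exp_neg_abs a <= M * exp (- INR N)) by (apply Rmult_le_compat_l; lra).
  assert (M * exp_neg_abs b <= M * exp (- INR N)) by (apply Rmult_le_compat_l; lra).
  lra.
Qed.

(** * Gaussian moments *)

Definition phi_quartic_const : R := 64 * exp 1 / sqrt (2 * PI).

Lemma phi_quartic_const_pos : 0 < phi_quartic_const.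
Proof.
  unfold phi_quartic_const. apply Rdiv_lt_0_compat.
  pose proof (exp_pos 1); lra. apply sqrt2pi_pos.
Qed.

Lemma phi_quartic_le t : phi t * (1 + t * t) ^ 2 <= phi_quartic_const * exp_neg_abs t.
Proof.
  unfold phi, phi_quartic_const, exp_neg_abs. pose proof sqrt2pi_pos.
  assert (A : (1 + t * t) ^ 2 <= 64 * exp (t * t / 4)).
  { pose proof (exp_ge_sq (t * t / 4)). assert (0 <= t * t / 4) by nra. nra. }
  assert (B : exp (t * t / 4) <= exp 1 * exp (t * t / 2 - Rabs t)).
  { rewrite <- exp_plus. apply exp_le_exp_of_le.
    pose proof (Rabs_pos t). assert (Rabs t * Rabs t = t * t) by
      (rewrite <- Rabs_mult; apply Rabs_right; nra).
    assert (0 <= (Rabs t / 2 - 1) ^ 2) by apply pow2_ge_0. nra. }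
  assert (C : exp (- (t * t) / 2) * exp (t * t / 2 - Rabs t) = exp (- Rabs t)).
  { rewrite <- exp_plus. f_equal. field. }
  pose proof (exp_pos (- (t * t) / 2)).
  apply Rle_trans with
    (exp (- (t * t) / 2) / sqrt (2 * PI) * (64 * (exp 1 * exp (t * t / 2 - Rabs t)))).
  - apply Rmult_le_compat_l. apply Rlt_le, Rdiv_lt_0_compat; lra. pose proof (exp_pos 1). nra.
  - rewrite <- C. apply Req_le. field. lra.
Qed.

Lemma phi_mult_continuous (g : R -> R) :
  (forall t, continuous g t) -> forall t, continuous (fun t => phi t * g t) t.
Proof. intros gc t. apply (continuous_mult (K:=R_AbsRing) phi g). apply phi_continuous. apply gc. Qed.

Lemma phi_mult_dominated (g : R -> R) c t : 0 <= c -> Rabs (g t) <= c * (1 + t * t) ^ 2 ->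
  Rabs (phi t * g t) <= (c * phi_quartic_const) * exp_neg_abs t.
Proof.
  intros Hc H. rewrite Rabs_mult, (Rabs_right (phi t)) by (apply Rle_ge, Rlt_le, phi_pos).
  pose proof (phi_pos t). pose proof (phi_quartic_le t).
  apply Rle_trans with (phi t * (c * (1 + t * t) ^ 2)). apply Rmult_le_compat_l; lra.
  replace (phi t * (c * (1 + t * t) ^ 2)) with (c * (phi t * (1 + t * t) ^ 2)) by ring.
  rewrite Rmult_assoc. apply Rmult_le_compat_l; lra.
Qed.

Lemma is_improper_exists_phi_quartic g M : (forall t, continuous g t) ->
  (forall t, Rabs (g t) <= M * (1 + t * t) ^ 2) -> exists L, is_improper (fun t => phi t * g t) L.
Proof.
  intros gc gb. apply (is_improper_exists_dominated _ (M * phi_quartic_const)).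
  - apply phi_mult_continuous, gc.
  - intro t. apply phi_mult_dominated; auto.
    pose proof (Rabs_pos (g t)). specialize (gb t).
    assert (0 < (1 + t * t) ^ 2) by (apply pow_lt; nra). nra.
Qed.

(* Stein's identity [(- q phi)' = phi (t q - q')] reduces the moments of [z] to boundary terms. *)
Lemma is_improper_phi_poly_antideriv (q h : R -> R) c :
  0 <= c -> (forall t, is_derive (fun t => - q t * phi t) t (h t)) ->
  (forall t, continuous h t) -> (forall t, Rabs (q t) <= c * (1 + t * t) ^ 2) ->
  is_improper h 0.
Proof.
  intros Hc Hd hc Hq.
  apply (is_improper_derive_decay (fun t => - q t * phi t) h (c * phi_quartic_const)); auto.
  - pose proof phi_quartic_const_pos. apply Rmult_le_pos; lra.
  - intro t. replace (- q t * phi t) with (phi t * (- q t)) by ring.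
    apply (phi_mult_dominated (fun t => - q t)); auto. rewrite Rabs_Ropp. auto.
Qed.

Ltac phi_derive :=
  unfold phi; auto_derive;
  [pose proof sqrt2pi_pos; lra | pose proof sqrt2pi_pos; toR; unfold Rdiv; field; lra].

Lemma is_improper_phi_m1 : is_improper (fun t => phi t * t) 0.
Proof.
  apply (is_improper_phi_poly_antideriv (fun _ => 1) _ 1); [lra| |..].
  - intro t. phi_derive.
  - apply phi_mult_continuous. intro; apply continuous_id.
  - intro t. rewrite Rabs_R1. nra.
Qed.

Lemma is_improper_phi_m2 : is_improper (fun t => phi t * (t * t)) 1.
Proof.
  assert (H0 : is_improper (fun t => phi t * (t * t) - phi t) 0).
  { apply (is_improper_phi_poly_antideriv (fun t => t) _ 1); [lra| |..].
    - intro t. phi_derive.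
    - intro t. apply (continuous_minus (V:=R_NormedModule) (fun t => phi t * (t * t)) phi).
      + apply phi_mult_continuous. intro; apply continuous_of_ex_derive; auto_derive; auto.
      + apply phi_continuous.
    - intro t. unfold Rabs; destruct (Rcase_abs t); nra. }
  apply is_improper_ext with (fun t => (phi t * (t * t) - phi t) + phi t). intros; ring.
  rewrite <- (Rplus_0_l 1). apply is_improper_plus; auto. apply is_improper_phi.
Qed.

Lemma is_improper_phi_m4 : is_improper (fun t => phi t * (t * t * t * t)) 3.
Proof.
  assert (H0 : is_improper (fun t => phi t * (t * t * t * t) - 3 * phi t) 0).
  { apply (is_improper_phi_poly_antideriv (fun t => t * t * t + 3 * t) _ 4); [lra| |..].
    - intro t. phi_derive.
    - intro t.
      apply (continuous_minus (V:=R_NormedModule) (fun t => phi t * (t * t * t * t))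
                              (fun t => 3 * phi t)).
      + apply phi_mult_continuous. intro; apply continuous_of_ex_derive; auto_derive; auto.
      + apply continuous_of_ex_derive. unfold phi; auto_derive. pose proof sqrt2pi_pos; lra.
    - intro t. unfold Rabs; destruct (Rcase_abs (t * t * t + 3 * t)); simpl; nra. }
  apply is_improper_ext with (fun t => (phi t * (t * t * t * t) - 3 * phi t) + 3 * phi t).
  intros; ring.
  replace 3 with (0 + 3 * 1) at 1 by ring.
  apply is_improper_plus; auto. apply is_improper_scal, is_improper_phi.
Qed.

(** * Finite sums and products *)

Fixpoint rprod (m : nat) (f : nat -> R) : R :=
  match m with O => 1 | S m' => rprod m' f * f m' end.

Lemma rsum_S n f : rsum (S n) f = rsum n f + f n.
Proof.
  unfold rsum. rewrite seq_S, map_app, fold_right_app. simpl.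
  generalize (map f (seq 0 n)). intro l. induction l; simpl; [ring|rewrite IHl; ring].
Qed.

Lemma rsum_ext n f g : (forall i, (i < n)%nat -> f i = g i) -> rsum n f = rsum n g.
Proof.
  induction n; intros H. reflexivity.
  rewrite !rsum_S, IHn, H by (try intros; try apply H; lia). reflexivity.
Qed.

Lemma rsum_plus n f g : rsum n (fun i => f i + g i) = rsum n f + rsum n g.
Proof. induction n. unfold rsum; simpl; ring. rewrite !rsum_S, IHn. ring. Qed.

Lemma rsum_scal n c f : rsum n (fun i => c * f i) = c * rsum n f.
Proof. induction n. unfold rsum; simpl; ring. rewrite !rsum_S, IHn. ring. Qed.

Lemma rsum_minus n f g : rsum n f - rsum n g = rsum n (fun i => f i - g i).
Proof.
  replace (rsum n f - rsum n g) with (rsum n f + (-1) * rsum n g) by ring.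
  rewrite <- rsum_scal, <- rsum_plus. apply rsum_ext; intros; ring.
Qed.

Lemma rsum_const n c : rsum n (fun _ => c) = INR n * c.
Proof. induction n. unfold rsum; simpl; ring. rewrite rsum_S, IHn, S_INR. ring. Qed.

Lemma rsum_le n f g : (forall i, (i < n)%nat -> f i <= g i) -> rsum n f <= rsum n g.
Proof.
  induction n; intros H. unfold rsum; simpl; lra.
  rewrite !rsum_S. apply Rplus_le_compat. apply IHn; intros; apply H; lia. apply H; lia.
Qed.

Lemma rsum_abs_le n h : Rabs (rsum n h) <= rsum n (fun i => Rabs (h i)).
Proof.
  induction n. unfold rsum; simpl; rewrite Rabs_R0; lra.
  rewrite !rsum_S. eapply Rle_trans. apply Rabs_triang. lra.
Qed.

Lemma rsum_sq N h : (rsum N h) ^ 2 = rsum N (fun i => rsum N (fun i' => h i * h i')).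
Proof.
  replace ((rsum N h) ^ 2) with (rsum N h * rsum N h) by ring.
  rewrite <- rsum_scal. apply rsum_ext; intros. rewrite Rmult_comm, <- rsum_scal.
  apply rsum_ext; intros. ring.
Qed.

Lemma rsum_delta N i x : (i < N)%nat -> rsum N (fun i' => if Nat.eqb i i' then x else 0) = x.
Proof.
  induction N; intros Hi. lia. rewrite rsum_S.
  destruct (Nat.eq_dec i N) as [->|Hn].
  - rewrite Nat.eqb_refl, (rsum_ext N _ (fun _ => 0)), rsum_const. ring.
    intros j Hj. destruct (Nat.eqb_spec N j); try lia; auto.
  - rewrite IHN by lia. destruct (Nat.eqb_spec i N); try lia. ring.
Qed.

(* The second moment of a sum of independent terms: mean squared plus the variances. *)
Lemma rsum_sq_diag_split N (a P D : nat -> R) :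
  rsum N (fun i => rsum N (fun i' => a i * a i' * (if Nat.eqb i i' then D i else P i * P i'))) =
  (rsum N (fun i => a i * P i)) ^ 2 + rsum N (fun i => a i ^ 2 * (D i - P i ^ 2)).
Proof.
  rewrite rsum_sq, <- rsum_plus. apply rsum_ext; intros i Hi.
  rewrite <- (rsum_delta N i (a i ^ 2 * (D i - P i ^ 2))) by auto.
  rewrite <- rsum_plus. apply rsum_ext; intros i' _.
  destruct (Nat.eqb_spec i i'); [subst|]; ring.
Qed.

Lemma rprod_ext m f g : (forall j, (j < m)%nat -> f j = g j) -> rprod m f = rprod m g.
Proof.
  induction m; intros H. reflexivity. simpl. rewrite IHm, H by (try intros; try apply H; lia).
  reflexivity.
Qed.

Lemma rprod_mult m f g : rprod m (fun j => f j * g j) = rprod m f * rprod m g.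
Proof. induction m; simpl; [|rewrite IHm]; ring. Qed.

Lemma rprod_one m g : (forall j, (j < m)%nat -> g j = 1) -> rprod m g = 1.
Proof.
  induction m; intros Hg; simpl. auto. rewrite IHm, Hg by (try intros; try apply Hg; lia). ring.
Qed.

Lemma rprod_two_support m g p q : p <> q ->
  (forall j, (j < m)%nat -> j <> p -> j <> q -> g j = 1) ->
  rprod m g = (if Nat.ltb p m then g p else 1) * (if Nat.ltb q m then g q else 1).
Proof.
  intros Hpq. induction m; intros Hg.
  - simpl. ring.
  - simpl. rewrite IHm by (intros; apply Hg; lia).
    destruct (Nat.eq_dec m p) as [->|Hp]; [|destruct (Nat.eq_dec m q) as [->|Hq]].
    + destruct (Nat.ltb_spec p (S p)), (Nat.ltb_spec p p); try lia.
      destruct (Nat.ltb_spec q (S p)), (Nat.ltb_spec q p); try lia; ring.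
    + destruct (Nat.ltb_spec q (S q)), (Nat.ltb_spec q q); try lia.
      destruct (Nat.ltb_spec p (S q)), (Nat.ltb_spec p q); try lia; ring.
    + rewrite (Hg m) by lia.
      destruct (Nat.ltb_spec p (S m)), (Nat.ltb_spec p m); try lia;
      destruct (Nat.ltb_spec q (S m)), (Nat.ltb_spec q m); try lia; ring.
Qed.

Lemma is_improper_rsum N (h : nat -> R -> R) (L : nat -> R) :
  (forall i, (i < N)%nat -> is_improper (h i) (L i)) ->
  is_improper (fun t => rsum N (fun i => h i t)) (rsum N L).
Proof.
  induction N; intros H.
  - apply is_improper_ext with (fun _ => 0). intros; reflexivity. apply is_improper_zero.
  - apply is_improper_ext with (fun t => rsum N (fun i => h i t) + h N t).
    { intros; rewrite rsum_S; auto. }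
    rewrite rsum_S. apply is_improper_plus. apply IHN; intros; apply H; lia. apply H; lia.
Qed.

(** * Expectations of sums of products of independent coordinates *)

Lemma gauss_exp_ext m : forall F G L, (forall z, F z = G z) -> gauss_exp m F L -> gauss_exp m G L.
Proof.
  induction m; simpl; intros F G L E H.
  - rewrite H; auto.
  - destruct H as [g [H1 H2]]. exists g. split; auto.
    intros t. apply IHm with (fun z => F (upd z m t)); auto.
Qed.

Lemma gauss_exp_sum_prod m : forall (N : nat) (c : nat -> nat -> R)
  (f : nat -> nat -> nat -> R -> R) (e : nat -> nat -> nat -> R) F,
  (forall z, F z = rsum N (fun i => rsum N (fun i' => c i i' * rprod m (fun j => f i i' j (z j))))) ->
  (forall i i' j, (j < m)%nat -> is_improper (fun t => phi t * f i i' j t) (e i i' j)) ->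
  gauss_exp m F (rsum N (fun i => rsum N (fun i' => c i i' * rprod m (e i i')))).
Proof.
  induction m; intros N c f e F HF He.
  - simpl. rewrite HF. reflexivity.
  - simpl.
    exists (fun t => rsum N (fun i => rsum N (fun i' => (c i i' * f i i' m t) * rprod m (e i i')))).
    split.
    + intro t. apply IHm with (f := f); [|intros; apply He; lia].
      intro z. rewrite HF. apply rsum_ext; intros i _. apply rsum_ext; intros i' _. simpl.
      unfold upd at 2. rewrite Nat.eqb_refl.
      rewrite (rprod_ext m (fun j => f i i' j (upd z m t j)) (fun j => f i i' j (z j))); [ring|].
      intros j Hj. unfold upd. destruct (Nat.eqb_spec j m); [lia|reflexivity].
    + apply improper_int_of_is_improper.
      replace (rsum N (fun i => rsum N (fun i' => c i i' * (rprod m (e i i') * e i i' m))))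
        with (rsum N (fun i => rsum N (fun i' => (c i i' * rprod m (e i i')) * e i i' m)))
        by (apply rsum_ext; intros; apply rsum_ext; intros; ring).
      apply is_improper_ext with
        (fun t => rsum N (fun i => rsum N (fun i' =>
                    (c i i' * rprod m (e i i')) * (phi t * f i i' m t)))).
      { intro t. rewrite <- rsum_scal. apply rsum_ext; intros.
        rewrite <- rsum_scal. apply rsum_ext; intros. ring. }
      apply is_improper_rsum. intros i _. apply is_improper_rsum. intros i' _.
      apply is_improper_scal, He. lia.
Qed.

(* [gauss_mean g] is [E g(z)] for [z ~ N(0,1)], meaningful when the integral exists. *)
Definition gauss_mean (g : R -> R) : R :=
  epsilon (inhabits 0) (fun L => is_improper (fun t => phi t * g t) L).

Lemma gauss_mean_spec g :
  (exists L, is_improper (fun t => phi t * g t) L) -> is_improper (fun t => phi t * g t) (gauss_mean g).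
Proof. exact (epsilon_spec (inhabits 0) (fun L => is_improper (fun t => phi t * g t) L)). Qed.

Lemma gauss_mean_eq g L : is_improper (fun t => phi t * g t) L -> gauss_mean g = L.
Proof.
  intro H. apply (is_improper_unique (fun t => phi t * g t)); auto. apply gauss_mean_spec. eauto.
Qed.

Lemma gauss_mean_one g : (forall t, g t = 1) -> gauss_mean g = 1.
Proof.
  intro H. apply gauss_mean_eq. apply is_improper_ext with phi.
  intro; rewrite H; ring. apply is_improper_phi.
Qed.

Definition quad_dominated (g : R -> R) : Prop :=
  (forall t, continuous g t) /\ exists M, forall t, Rabs (g t) <= M * (1 + t * t).

Lemma quad_dominated_one : quad_dominated (fun _ => 1).
Proof. split. intro; apply continuous_const. exists 1. intro t. rewrite Rabs_R1. nra. Qed.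

Lemma quad_dominated_mult_integrable g h : quad_dominated g -> quad_dominated h ->
  exists L, is_improper (fun t => phi t * (g t * h t)) L.
Proof.
  intros [gc [M gb]] [hc [M' hb]]. apply (is_improper_exists_phi_quartic _ (M * M')).
  - intro t. apply (continuous_mult (K:=R_AbsRing) g h); auto.
  - intro t. rewrite Rabs_mult. specialize (gb t). specialize (hb t).
    pose proof (Rabs_pos (g t)). pose proof (Rabs_pos (h t)).
    replace (M * M' * (1 + t * t) ^ 2) with ((M * (1 + t * t)) * (M' * (1 + t * t))) by ring.
    apply Rmult_le_compat; auto.
Qed.

Lemma quad_dominated_integrable g : quad_dominated g -> exists L, is_improper (fun t => phi t * g t) L.
Proof.
  intros Hg. destruct (quad_dominated_mult_integrable g _ Hg quad_dominated_one) as [L HL].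
  exists L. apply is_improper_ext with (2 := HL). intros; ring.
Qed.

Lemma pos_part_nonneg x : 0 <= pos_part x.
Proof. apply Rmax_r. Qed.

Lemma pos_part_le_abs x : pos_part x <= Rabs x.
Proof. unfold pos_part, Rmax, Rabs. destruct (Rle_dec x 0), (Rcase_abs x); lra. Qed.

Lemma pos_part_split x : pos_part x = x + pos_part (- x).
Proof. unfold pos_part, Rmax. destruct (Rle_dec x 0), (Rle_dec (- x) 0); lra. Qed.

Lemma pos_part_continuous (g : R -> R) :
  (forall t, continuous g t) -> forall t, continuous (fun t => pos_part (g t)) t.
Proof.
  intros gc t. apply (continuous_ext (fun t => / 2 * (g t + Rabs (g t)))).
  { intros. unfold pos_part, Rmax, Rabs.
    destruct (Rle_dec (g x) 0), (Rcase_abs (g x)); toR; lra. }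
  apply (continuous_scal_r (K:=R_AbsRing) (V:=R_NormedModule) (/ 2) (fun t => g t + Rabs (g t))).
  apply (continuous_plus (V:=R_NormedModule) g (fun t => Rabs (g t))). auto.
  apply (continuous_comp g Rabs). auto. apply continuous_Rabs.
Qed.

(** * Moments of the thresholded statistic *)

Definition chi2_mgf (lam : R) : R := gauss_mean (fun t => exp (lam * (t * t))).

Lemma is_improper_chi2_mgf lam : lam < 1 / 2 ->
  is_improper (fun t => phi t * exp (lam * (t * t))) (chi2_mgf lam).
Proof.
  intros Hlam. set (ep := 1 - 2 * lam). assert (ep_pos : 0 < ep) by (unfold ep; lra).
  apply gauss_mean_spec.
  apply (is_improper_exists_dominated _ (exp (1 / (2 * ep)) / sqrt (2 * PI))).
  { apply phi_mult_continuous. intro t. apply continuous_of_ex_derive. auto_derive. auto. }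
  intro t. pose proof sqrt2pi_pos. unfold phi, exp_neg_abs.
  rewrite Rabs_right.
  2:{ apply Rle_ge, Rmult_le_pos. apply Rlt_le, Rdiv_lt_0_compat; auto. apply exp_pos.
      apply Rlt_le, exp_pos. }
  replace (exp (- (t * t) / 2) / sqrt (2 * PI) * exp (lam * (t * t)))
    with (exp (- (t * t) / 2 + lam * (t * t)) / sqrt (2 * PI)) by (rewrite exp_plus; field; lra).
  replace (- (t * t) / 2 + lam * (t * t)) with (- ep * (t * t) / 2) by (unfold ep; field).
  replace (exp (1 / (2 * ep)) / sqrt (2 * PI) * exp (- Rabs t))
    with (exp (1 / (2 * ep) + - Rabs t) / sqrt (2 * PI)) by (rewrite exp_plus; field; lra).
  unfold Rdiv at 1 3. apply Rmult_le_compat_r. apply Rlt_le, Rinv_0_lt_compat; lra.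
  apply exp_le_exp_of_le.
  (* completing the square: [ep / 2 * (Rabs t - 1 / ep) ^ 2 >= 0] *)
  assert (Ha : Rabs t * Rabs t = t * t) by (rewrite <- Rabs_mult; apply Rabs_right; nra).
  assert (0 <= ep * (Rabs t - 1 / ep) ^ 2) by (apply Rmult_le_pos; [lra|apply pow2_ge_0]).
  assert (ep * (Rabs t - 1 / ep) ^ 2 = ep * (t * t) - 2 * Rabs t + 1 / ep)
    by (rewrite <- Ha; field; lra).
  assert (1 / (2 * ep) = (1 / ep) / 2) by (field; lra). lra.
Qed.

Lemma chi2_mgf_nonneg lam : lam < 1 / 2 -> 0 <= chi2_mgf lam.
Proof.
  intro Hlam. apply (is_improper_le _ _ _ _ is_improper_zero (is_improper_chi2_mgf lam Hlam)).
  intro t. apply Rmult_le_pos; apply Rlt_le; [apply phi_pos|apply exp_pos].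
Qed.

Lemma pos_part_sq_le_exp lam y : 0 < lam -> pos_part y ^ 2 <= (4 / lam ^ 2) * exp (lam * y).
Proof.
  intros Hl. assert (0 < 4 / lam ^ 2) by (apply Rdiv_lt_0_compat; nra).
  unfold pos_part, Rmax. destruct (Rle_dec y 0).
  - pose proof (exp_pos (lam * y)). apply Rle_trans with 0. simpl; nra.
    apply Rlt_le, Rmult_lt_0_compat; auto.
  - assert (0 <= lam * y) by nra.
    apply Rle_trans with (4 / lam ^ 2 * ((1 + lam * y / 2) ^ 2)).
    + replace (4 / lam ^ 2 * (1 + lam * y / 2) ^ 2) with ((2 / lam + y) ^ 2) by (field; lra).
      assert (0 < 2 / lam) by (apply Rdiv_lt_0_compat; lra). simpl; nra.
    + apply Rmult_le_compat_l; [lra|]. apply exp_ge_sq; lra.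
Qed.

Section ThresholdStatistic.
Variables s T mu0 : R.
Hypothesis T_nonneg : 0 <= T.
Hypothesis mu0_def : is_improper (fun t => phi t * pos_part ((s * t) ^ 2 - s ^ 2 * T)) mu0.

Definition thr_stat (m t : R) : R := pos_part ((m + s * t) ^ 2 - s ^ 2 * T) - mu0.

Lemma thr_stat_quad_dominated m : quad_dominated (thr_stat m).
Proof.
  split.
  - intro t. apply (continuous_minus (V:=R_NormedModule) _ (fun _ => mu0)).
    + apply pos_part_continuous. intro; apply continuous_of_ex_derive; auto_derive; auto.
    + apply continuous_const.
  - exists (2 * m ^ 2 + 2 * s ^ 2 + s ^ 2 * T + Rabs mu0). intro t. unfold thr_stat.
    eapply Rle_trans. unfold Rminus at 1. apply Rabs_triang. rewrite Rabs_Ropp.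
    set (y := (m + s * t) ^ 2 - s ^ 2 * T).
    pose proof (pos_part_le_abs y). pose proof (pos_part_nonneg y).
    rewrite (Rabs_right (pos_part y)) by lra.
    assert (0 <= s ^ 2 * T) by (apply Rmult_le_pos; nra).
    assert (0 <= (m + s * t) ^ 2) by apply pow2_ge_0.
    assert (Rabs y <= (m + s * t) ^ 2 + s ^ 2 * T) by (unfold y, Rabs; destruct Rcase_abs; nra).
    assert ((m + s * t) ^ 2 <= 2 * m ^ 2 + 2 * s ^ 2 * (t * t))
      by (assert (0 <= (m - s * t) ^ 2) by apply pow2_ge_0; nra).
    pose proof (Rabs_pos mu0). assert (0 <= t * t) by nra. assert (0 <= m ^ 2) by apply pow2_ge_0.
    assert (0 <= (2 * m ^ 2 + s ^ 2 * T + Rabs mu0) * (t * t)) by (apply Rmult_le_pos; lra).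
    assert ((2 * m ^ 2 + 2 * s ^ 2 + s ^ 2 * T + Rabs mu0) * (1 + t * t)
            >= 2 * m ^ 2 + 2 * s ^ 2 * (t * t) + s ^ 2 * T + Rabs mu0)
      by (assert (0 <= 2 * s ^ 2) by nra; nra).
    lra.
Qed.

Definition thr_mean (m : R) : R := gauss_mean (thr_stat m).
Definition thr_sqmean (m : R) : R := gauss_mean (fun t => thr_stat m t * thr_stat m t).
Definition thr_var (m : R) : R := thr_sqmean m - thr_mean m ^ 2.

Lemma is_improper_thr_mean m : is_improper (fun t => phi t * thr_stat m t) (thr_mean m).
Proof. apply gauss_mean_spec, quad_dominated_integrable, thr_stat_quad_dominated. Qed.

Lemma is_improper_thr_sqmean m :
  is_improper (fun t => phi t * (thr_stat m t * thr_stat m t)) (thr_sqmean m).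
Proof. apply gauss_mean_spec, quad_dominated_mult_integrable; apply thr_stat_quad_dominated. Qed.

Lemma mu0_bounds : 0 <= mu0 <= s ^ 2.
Proof.
  split.
  - apply (is_improper_le _ _ _ _ is_improper_zero mu0_def).
    intro t. apply Rmult_le_pos. apply Rlt_le, phi_pos. apply pos_part_nonneg.
  - assert (H := is_improper_scal _ (s ^ 2) _ is_improper_phi_m2). rewrite Rmult_1_r in H.
    apply (is_improper_le _ _ _ _ mu0_def H).
    intro t. pose proof (phi_pos t).
    assert (pos_part ((s * t) ^ 2 - s ^ 2 * T) <= s ^ 2 * (t * t)).
    { unfold pos_part. apply Rmax_lub; [|nra]. assert (0 <= s ^ 2 * T) by (apply Rmult_le_pos; nra). nra. }
    nra.
Qed.

Lemma thr_mean_0 : thr_mean 0 = 0.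
Proof.
  apply gauss_mean_eq.
  apply is_improper_ext with (fun t => phi t * pos_part ((s * t) ^ 2 - s ^ 2 * T) + (- mu0) * phi t).
  { intro t. unfold thr_stat. replace ((0 + s * t) ^ 2) with ((s * t) ^ 2) by ring. ring. }
  replace 0 with (mu0 + - mu0 * 1) by ring.
  apply is_improper_plus; auto. apply is_improper_scal, is_improper_phi.
Qed.

Lemma is_improper_shift_sq m : is_improper (fun t => phi t * (m + s * t) ^ 2) (m ^ 2 + s ^ 2).
Proof.
  apply is_improper_ext with
    (fun t => (m ^ 2 * phi t + (2 * m * s) * (phi t * t)) + s ^ 2 * (phi t * (t * t))).
  { intro; ring. }
  replace (m ^ 2 + s ^ 2) with ((m ^ 2 * 1 + 2 * m * s * 0) + s ^ 2 * 1) by ring.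
  apply is_improper_plus; [apply is_improper_plus|]; apply is_improper_scal;
    auto using is_improper_phi, is_improper_phi_m1, is_improper_phi_m2.
Qed.

(* [(x)_+ = x + (- x)_+] with [0 <= (- x)_+ <= s ^ 2 T] for [x = X ^ 2 - s ^ 2 T], and
   [E (X ^ 2) = m ^ 2 + s ^ 2], [0 <= mu0 <= s ^ 2]. *)
Lemma thr_mean_bias m : Rabs (thr_mean m - m ^ 2) <= s ^ 2 * (1 + T).
Proof.
  pose proof mu0_bounds.
  set (r := fun t => pos_part (- ((m + s * t) ^ 2 - s ^ 2 * T))).
  assert (r_le : forall t, r t <= s ^ 2 * T).
  { intro t. unfold r, pos_part. apply Rmax_lub.
    pose proof (pow2_ge_0 (m + s * t)). nra. apply Rmult_le_pos; nra. }
  assert (Hr : is_improper (fun t => phi t * r t) (thr_mean m - (m ^ 2 + s ^ 2 - s ^ 2 * T - mu0))).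
  { apply is_improper_ext with
      (fun t => phi t * thr_stat m t + (-1) * (phi t * (m + s * t) ^ 2) + (s ^ 2 * T + mu0) * phi t).
    { intro t. unfold thr_stat, r. rewrite (pos_part_split ((m + s * t) ^ 2 - s ^ 2 * T)). ring. }
    replace (thr_mean m - (m ^ 2 + s ^ 2 - s ^ 2 * T - mu0))
      with (thr_mean m + (-1) * (m ^ 2 + s ^ 2) + (s ^ 2 * T + mu0) * 1) by ring.
    apply is_improper_plus; [apply is_improper_plus|].
    - apply is_improper_thr_mean.
    - apply is_improper_scal, is_improper_shift_sq.
    - apply is_improper_scal, is_improper_phi. }
  assert (0 <= thr_mean m - (m ^ 2 + s ^ 2 - s ^ 2 * T - mu0)).
  { apply (is_improper_le _ _ _ _ is_improper_zero Hr). intro t.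
    apply Rmult_le_pos. apply Rlt_le, phi_pos. apply pos_part_nonneg. }
  assert (thr_mean m - (m ^ 2 + s ^ 2 - s ^ 2 * T - mu0) <= s ^ 2 * T).
  { assert (H1 := is_improper_scal _ (s ^ 2 * T) _ is_improper_phi). rewrite Rmult_1_r in H1.
    apply (is_improper_le _ _ _ _ Hr H1). intro t. pose proof (phi_pos t). pose proof (r_le t).
    nra. }
  unfold Rabs; destruct (Rcase_abs (thr_mean m - m ^ 2)); nra.
Qed.

Lemma is_improper_thr_stat_dev_sq m c :
  is_improper (fun t => phi t * (thr_stat m t - c) ^ 2) (thr_sqmean m - 2 * c * thr_mean m + c ^ 2).
Proof.
  apply is_improper_ext with
    (fun t => phi t * (thr_stat m t * thr_stat m t) + (- 2 * c) * (phi t * thr_stat m t) + c ^ 2 * phi t).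
  { intro; ring. }
  replace (thr_sqmean m - 2 * c * thr_mean m + c ^ 2)
    with (thr_sqmean m + (-2 * c) * thr_mean m + c ^ 2 * 1) by ring.
  apply is_improper_plus; [apply is_improper_plus|].
  - apply is_improper_thr_sqmean.
  - apply is_improper_scal, is_improper_thr_mean.
  - apply is_improper_scal, is_improper_phi.
Qed.

Lemma thr_var_nonneg m : 0 <= thr_var m.
Proof.
  replace (thr_var m) with (thr_sqmean m - 2 * thr_mean m * thr_mean m + thr_mean m ^ 2)
    by (unfold thr_var; ring).
  apply (is_improper_le _ _ _ _ is_improper_zero (is_improper_thr_stat_dev_sq m (thr_mean m))).
  intro t. apply Rmult_le_pos. apply Rlt_le, phi_pos. apply pow2_ge_0.
Qed.

Lemma thr_var_le_of_dominated m c W w : (forall t, (thr_stat m t - c) ^ 2 <= W t) ->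
  is_improper (fun t => phi t * W t) w -> thr_var m <= w.
Proof.
  intros HW Hw.
  assert (thr_sqmean m - 2 * c * thr_mean m + c ^ 2 <= w).
  { apply (is_improper_le _ _ _ _ (is_improper_thr_stat_dev_sq m c) Hw). intro t.
    apply Rmult_le_compat_l. apply Rlt_le, phi_pos. apply HW. }
  assert (0 <= (thr_mean m - c) ^ 2) by apply pow2_ge_0. unfold thr_var. nra.
Qed.

Lemma thr_var_le m : thr_var m <= 3 * (4 * m ^ 2 * s ^ 2 + 3 * s ^ 4 + s ^ 4 * T ^ 2).
Proof.
  pose proof mu0_bounds.
  apply (thr_var_le_of_dominated m (m ^ 2 - s ^ 2 * T - mu0)
    (fun t => 3 * ((4 * m ^ 2 * s ^ 2) * (t * t) + s ^ 4 * (t * t * t * t) + s ^ 4 * T ^ 2))).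
  - intro t. unfold thr_stat. rewrite (pos_part_split ((m + s * t) ^ 2 - s ^ 2 * T)).
    set (r := pos_part (- ((m + s * t) ^ 2 - s ^ 2 * T))).
    assert (0 <= r) by apply pos_part_nonneg.
    assert (r <= s ^ 2 * T).
    { unfold r, pos_part. apply Rmax_lub. pose proof (pow2_ge_0 (m + s * t)). nra.
      apply Rmult_le_pos; nra. }
    replace ((m + s * t) ^ 2 - s ^ 2 * T + r - mu0 - (m ^ 2 - s ^ 2 * T - mu0))
      with ((2 * m * s * t) + (s ^ 2 * (t * t)) + r) by ring.
    assert (r ^ 2 <= s ^ 4 * T ^ 2) by nra.
    assert (((2 * m * s * t) + (s ^ 2 * (t * t)) + r) ^ 2
            <= 3 * ((2 * m * s * t) ^ 2 + (s ^ 2 * (t * t)) ^ 2 + r ^ 2)).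
    { assert (0 <= (2 * m * s * t - s ^ 2 * (t * t)) ^ 2) by apply pow2_ge_0.
      assert (0 <= (2 * m * s * t - r) ^ 2) by apply pow2_ge_0.
      assert (0 <= (s ^ 2 * (t * t) - r) ^ 2) by apply pow2_ge_0. nra. }
    nra.
  - apply is_improper_ext with
      (fun t => (3 * (4 * m ^ 2 * s ^ 2)) * (phi t * (t * t))
              + (3 * s ^ 4) * (phi t * (t * t * t * t)) + (3 * s ^ 4 * T ^ 2) * phi t).
    { intro; ring. }
    replace (3 * (4 * m ^ 2 * s ^ 2 + 3 * s ^ 4 + s ^ 4 * T ^ 2))
      with (3 * (4 * m ^ 2 * s ^ 2) * 1 + 3 * s ^ 4 * 3 + 3 * s ^ 4 * T ^ 2 * 1) by ring.
    apply is_improper_plus; [apply is_improper_plus|]; apply is_improper_scal;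
      auto using is_improper_phi_m2, is_improper_phi_m4, is_improper_phi.
Qed.

(* Chernoff: [(x)_+ ^ 2 <= (4 / lam ^ 2) exp (lam x)] with [x = z ^ 2 - T]. *)
Lemma thr_var_0_le lam : 0 < lam < 1 / 2 ->
  thr_var 0 <= s ^ 4 * (4 / lam ^ 2) * chi2_mgf lam * exp (- lam * T).
Proof.
  intros Hlam.
  apply (thr_var_le_of_dominated 0 (- mu0)
    (fun t => (s ^ 4 * (4 / lam ^ 2) * exp (- lam * T)) * exp (lam * (t * t)))).
  - intro t. unfold thr_stat.
    replace (pos_part ((0 + s * t) ^ 2 - s ^ 2 * T) - mu0 - - mu0)
      with (pos_part ((0 + s * t) ^ 2 - s ^ 2 * T)) by ring.
    replace ((0 + s * t) ^ 2 - s ^ 2 * T) with (s ^ 2 * (t * t - T)) by ring.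
    replace (pos_part (s ^ 2 * (t * t - T))) with (s ^ 2 * pos_part (t * t - T))
      by (unfold pos_part, Rmax; destruct (Rle_dec (s ^ 2 * (t * t - T)) 0),
            (Rle_dec (t * t - T) 0); nra).
    replace (s ^ 4 * (4 / lam ^ 2) * exp (- lam * T) * exp (lam * (t * t)))
      with (s ^ 4 * (4 / lam ^ 2 * exp (lam * (t * t - T))))
      by (replace (lam * (t * t - T)) with (- lam * T + lam * (t * t)) by ring;
          rewrite exp_plus; ring).
    replace ((s ^ 2 * pos_part (t * t - T)) ^ 2) with (s ^ 4 * pos_part (t * t - T) ^ 2) by ring.
    apply Rmult_le_compat_l. nra. apply pos_part_sq_le_exp. lra.
  - replace (s ^ 4 * (4 / lam ^ 2) * chi2_mgf lam * exp (- lam * T))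
      with ((s ^ 4 * (4 / lam ^ 2) * exp (- lam * T)) * chi2_mgf lam) by ring.
    apply is_improper_ext
      with (fun t => (s ^ 4 * (4 / lam ^ 2) * exp (- lam * T)) * (phi t * exp (lam * (t * t)))).
    { intro; ring. }
    apply is_improper_scal, is_improper_chi2_mgf. lra.
Qed.

End ThresholdStatistic.

(** * The exact mean squared error of a product estimator *)

Section ProductEstimator.
Variable n : nat.
Hypothesis n_pos : (0 < n)%nat.
Variables U V : nat -> R -> R.
Variables meanU meanV sqmeanU sqmeanV : nat -> R.
Variable Q : R.
Hypothesis U_dominated : forall i, quad_dominated (U i).
Hypothesis V_dominated : forall i, quad_dominated (V i).
Hypothesis U_mean : forall i, is_improper (fun t => phi t * U i t) (meanU i).
Hypothesis V_mean : forall i, is_improper (fun t => phi t * V i t) (meanV i).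
Hypothesis U_sqmean : forall i, is_improper (fun t => phi t * (U i t * U i t)) (sqmeanU i).
Hypothesis V_sqmean : forall i, is_improper (fun t => phi t * (V i t * V i t)) (sqmeanV i).

(* The error [/ n * sum_i U i (z i) * V i (z (n + i)) - Q] is written as
   [sum_(i <= n) coef i * prod_(j < 2 n) factor i j (z j)], the constant [- Q] being the
   summand [i = n]; its square is then a double sum of products of one-coordinate functions. *)
Let factor (i j : nat) (t : R) : R :=
  if Nat.ltb i n then
    (if Nat.eqb j i then U i t else if Nat.eqb j (n + i) then V i t else 1)
  else 1.

Let coef (i : nat) : R := if Nat.ltb i n then / INR n else - Q.

Let factor_dominated i j : quad_dominated (factor i j).
Proof.
  unfold factor. destruct (Nat.ltb i n); [destruct (Nat.eqb j i); [|destruct (Nat.eqb j (n + i))]|];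
    auto using quad_dominated_one.
Qed.

Let factor_other i j : (j <> i)%nat -> (j <> n + i)%nat -> forall t, factor i j t = 1.
Proof.
  intros H1 H2 t. unfold factor. destruct (Nat.ltb i n); auto.
  destruct (Nat.eqb_spec j i); try lia. destruct (Nat.eqb_spec j (n + i)); try lia. auto.
Qed.

Let factor_const i j : (n <= i)%nat -> forall t, factor i j t = 1.
Proof. intros H t. unfold factor. destruct (Nat.ltb_spec i n); try lia. auto. Qed.

Let factor_U i t : (i < n)%nat -> factor i i t = U i t.
Proof. intros H. unfold factor. destruct (Nat.ltb_spec i n); try lia. rewrite Nat.eqb_refl. auto. Qed.

Let factor_V i t : (i < n)%nat -> factor i (n + i) t = V i t.
Proof.
  intros H. unfold factor. destruct (Nat.ltb_spec i n); try lia.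
  destruct (Nat.eqb_spec (n + i) i); try lia. rewrite Nat.eqb_refl. auto.
Qed.

Let factor_disjoint i i' j : i <> i' ->
  (forall t, factor i j t = 1) \/ (forall t, factor i' j t = 1).
Proof.
  intros Hii. destruct (Nat.le_gt_cases n i); [left; apply factor_const; auto|].
  destruct (Nat.le_gt_cases n i'); [right; apply factor_const; auto|].
  destruct (Nat.eq_dec j i) as [->|H1]; [right; apply factor_other; lia|].
  destruct (Nat.eq_dec j (n + i)) as [->|H2]; [right; apply factor_other; lia|].
  left; apply factor_other; lia.
Qed.

Let pair_moment (i i' j : nat) : R :=
  if Nat.eqb i i' then gauss_mean (fun t => factor i j t * factor i j t)
  else gauss_mean (factor i j) * gauss_mean (factor i' j).

Let is_improper_pair_moment i i' j :
  is_improper (fun t => phi t * (factor i j t * factor i' j t)) (pair_moment i i' j).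
Proof.
  unfold pair_moment. destruct (Nat.eqb_spec i i') as [<-|Hne].
  - apply gauss_mean_spec, quad_dominated_mult_integrable; apply factor_dominated.
  - destruct (factor_disjoint i i' j Hne) as [H|H]; rewrite (gauss_mean_one _ H).
    + apply is_improper_ext with (fun t => phi t * factor i' j t). intro; rewrite H; ring.
      rewrite Rmult_1_l. apply gauss_mean_spec, quad_dominated_integrable, factor_dominated.
    + apply is_improper_ext with (fun t => phi t * factor i j t). intro; rewrite H; ring.
      rewrite Rmult_1_r. apply gauss_mean_spec, quad_dominated_integrable, factor_dominated.
Qed.

Let summand_mean i := if Nat.ltb i n then meanU i * meanV i else 1.
Let summand_sqmean i := if Nat.ltb i n then sqmeanU i * sqmeanV i else 1.

Let rprod_factor_support (g : nat -> R) i : (i < n)%nat ->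
  (forall j, (j < 2 * n)%nat -> j <> i -> j <> (n + i)%nat -> g j = 1) ->
  rprod (2 * n) g = g i * g (n + i)%nat.
Proof.
  intros Hi Hg. rewrite (rprod_two_support _ _ i (n + i)) by (auto; lia).
  destruct (Nat.ltb_spec i (2 * n)), (Nat.ltb_spec (n + i) (2 * n)); try lia. reflexivity.
Qed.

Let rprod_factor i z : rprod (2 * n) (fun j => factor i j (z j)) =
  if Nat.ltb i n then U i (z i) * V i (z (n + i)%nat) else 1.
Proof.
  destruct (Nat.ltb_spec i n).
  - rewrite (rprod_factor_support _ i) by (auto; intros; apply factor_other; lia).
    rewrite factor_U, factor_V; auto.
  - apply rprod_one. intros; apply factor_const; lia.
Qed.

Let rprod_mean_factor i : rprod (2 * n) (fun j => gauss_mean (factor i j)) = summand_mean i.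
Proof.
  unfold summand_mean. destruct (Nat.ltb_spec i n).
  - rewrite (rprod_factor_support _ i); auto.
    + f_equal; apply gauss_mean_eq.
      * apply is_improper_ext with (2 := U_mean i). intro t. rewrite factor_U; auto.
      * apply is_improper_ext with (2 := V_mean i). intro t. rewrite factor_V; auto.
    + intros j _ H1 H2. apply gauss_mean_one. intro t. apply factor_other; lia.
  - apply rprod_one. intros. apply gauss_mean_one. intro; apply factor_const; lia.
Qed.

Let rprod_pair_moment_diag i : rprod (2 * n) (pair_moment i i) = summand_sqmean i.
Proof.
  unfold summand_sqmean.
  rewrite (rprod_ext _ _ (fun j => gauss_mean (fun t => factor i j t * factor i j t))).
  2:{ intros; unfold pair_moment; rewrite Nat.eqb_refl; auto. }
  destruct (Nat.ltb_spec i n).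
  - rewrite (rprod_factor_support _ i); auto.
    + f_equal; apply gauss_mean_eq.
      * apply is_improper_ext with (2 := U_sqmean i). intro t. rewrite factor_U; auto.
      * apply is_improper_ext with (2 := V_sqmean i). intro t. rewrite factor_V; auto.
    + intros j _ H1 H2. apply gauss_mean_one. intro t. rewrite factor_other by lia. ring.
  - apply rprod_one. intros. apply gauss_mean_one. intro; rewrite factor_const by lia. ring.
Qed.

Let rprod_pair_moment i i' : rprod (2 * n) (pair_moment i i') =
  if Nat.eqb i i' then summand_sqmean i else summand_mean i * summand_mean i'.
Proof.
  destruct (Nat.eqb_spec i i') as [<-|Hne]; [apply rprod_pair_moment_diag|].
  rewrite (rprod_ext _ _ (fun j => gauss_mean (factor i j) * gauss_mean (factor i' j))).
  - rewrite rprod_mult, !rprod_mean_factor. auto.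
  - intros; unfold pair_moment. destruct (Nat.eqb_spec i i'); try lia. auto.
Qed.

Lemma gauss_exp_product_sq_error : gauss_exp (2 * n)
  (fun z => (/ INR n * rsum n (fun i => U i (z i) * V i (z (n + i)%nat)) - Q) ^ 2)
  ((/ INR n * rsum n (fun i => meanU i * meanV i) - Q) ^ 2 +
    rsum n (fun i => (/ INR n) ^ 2 * (sqmeanU i * sqmeanV i - (meanU i * meanV i) ^ 2))).
Proof.
  replace ((/ INR n * rsum n (fun i => meanU i * meanV i) - Q) ^ 2 +
           rsum n (fun i => (/ INR n) ^ 2 * (sqmeanU i * sqmeanV i - (meanU i * meanV i) ^ 2)))
    with (rsum (S n) (fun i => rsum (S n) (fun i' => coef i * coef i' * rprod (2 * n) (pair_moment i i')))).
  2:{ rewrite (rsum_ext _ _ (fun i => rsum (S n) (fun i' => coef i * coef i' *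
        (if Nat.eqb i i' then summand_sqmean i else summand_mean i * summand_mean i')))).
      2:{ intros; apply rsum_ext; intros; rewrite rprod_pair_moment; auto. }
      rewrite rsum_sq_diag_split, !rsum_S.
      unfold coef at 2 4, summand_mean at 2 4, summand_sqmean at 2.
      destruct (Nat.ltb_spec n n); try lia.
      rewrite <- rsum_scal.
      rewrite (rsum_ext n (fun i => coef i * summand_mean i) (fun i => / INR n * (meanU i * meanV i))).
      rewrite (rsum_ext n (fun i => coef i ^ 2 * (summand_sqmean i - summand_mean i ^ 2))
                 (fun i => (/ INR n) ^ 2 * (sqmeanU i * sqmeanV i - (meanU i * meanV i) ^ 2))).
      - ring.
      - intros i Hi. unfold coef, summand_sqmean, summand_mean.
        destruct (Nat.ltb_spec i n); try lia. ring.
      - intros i Hi. unfold coef, summand_mean. destruct (Nat.ltb_spec i n); try lia. ring. }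
  apply (gauss_exp_sum_prod (2 * n) (S n) (fun i i' => coef i * coef i')
           (fun i i' j t => factor i j t * factor i' j t) pair_moment).
  - intro z. cbv beta.
    transitivity ((rsum (S n) (fun i => coef i * rprod (2 * n) (fun j => factor i j (z j)))) ^ 2).
    2:{ rewrite rsum_sq. apply rsum_ext; intros; apply rsum_ext; intros. rewrite rprod_mult. ring. }
    f_equal. rewrite rsum_S, rprod_factor. unfold coef at 2.
    destruct (Nat.ltb_spec n n); try lia.
    rewrite <- rsum_scal, Rmult_1_r. unfold Rminus. f_equal. apply rsum_ext. intros i Hi.
    unfold coef. rewrite rprod_factor. destruct (Nat.ltb_spec i n); try lia. auto.
  - intros; apply is_improper_pair_moment.
Qed.

End ProductEstimator.

Definition nz_ind (x : R) : R := if Req_EM_T x 0 then 0 else 1.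

Lemma nnz_S n v : nnz (S n) v = (nnz n v + (if Req_EM_T (v n) 0 then 0 else 1))%nat.
Proof.
  unfold nnz. rewrite seq_S, filter_app, length_app. simpl.
  destruct (Req_EM_T (v n) 0); simpl; lia.
Qed.

Lemma rsum_nz_ind n v : rsum n (fun i => nz_ind (v i)) = INR (nnz n v).
Proof.
  induction n. reflexivity. rewrite rsum_S, nnz_S, plus_INR, IHn. unfold nz_ind.
  destruct (Req_EM_T (v n) 0); simpl; ring.
Qed.

Lemma abs_rsum_le_nnz n h v K : (forall i, (i < n)%nat -> v i = 0 -> h i = 0) ->
  (forall i, (i < n)%nat -> Rabs (h i) <= K) -> Rabs (rsum n h) <= K * INR (nnz n v).
Proof.
  intros H0 HK. eapply Rle_trans. apply rsum_abs_le. rewrite <- rsum_nz_ind, <- rsum_scal.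
  apply rsum_le. intros i Hi. unfold nz_ind. destruct (Req_EM_T (v i) 0).
  - rewrite H0 by auto. rewrite Rabs_R0; lra.
  - rewrite Rmult_1_r; auto.
Qed.

Lemma sq_le_sq_of_abs_le a c : Rabs a <= c -> a ^ 2 <= c ^ 2.
Proof. intros H. rewrite <- (pow2_abs a). pose proof (Rabs_pos a). apply pow_incr. lra. Qed.

Lemma sq_approx_le m a P R : Rabs m <= P -> Rabs (a - m ^ 2) <= R -> a ^ 2 <= (P ^ 2 + R) ^ 2.
Proof.
  intros Hm Ha. apply sq_le_sq_of_abs_le.
  pose proof (sq_le_sq_of_abs_le _ _ Hm). pose proof (pow2_ge_0 m).
  unfold Rabs in *. destruct (Rcase_abs a), (Rcase_abs (a - m ^ 2)); lra.
Qed.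

Lemma prod_approx_err_le m th a b P R :
  Rabs m <= P -> Rabs th <= P -> Rabs (a - m ^ 2) <= R -> Rabs (b - th ^ 2) <= R -> 0 <= R ->
  Rabs (a * b - m ^ 2 * th ^ 2) <= 2 * P ^ 2 * R + R ^ 2.
Proof.
  intros Hm Ht Ha Hb HR.
  pose proof (sq_le_sq_of_abs_le _ _ Hm). pose proof (pow2_ge_0 m).
  assert (Rabs b <= P ^ 2 + R).
  { pose proof (sq_le_sq_of_abs_le _ _ Ht). pose proof (pow2_ge_0 th).
    unfold Rabs in *. destruct (Rcase_abs b), (Rcase_abs (b - th ^ 2)); lra. }
  replace (a * b - m ^ 2 * th ^ 2) with ((a - m ^ 2) * b + m ^ 2 * (b - th ^ 2)) by ring.
  eapply Rle_trans. apply Rabs_triang. rewrite !Rabs_mult, (Rabs_right (m ^ 2)) by lra.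
  pose proof (Rabs_pos (a - m ^ 2)). pose proof (Rabs_pos (b - th ^ 2)). pose proof (Rabs_pos b).
  assert (Rabs (a - m ^ 2) * Rabs b <= R * (P ^ 2 + R)) by (apply Rmult_le_compat; lra).
  assert (m ^ 2 * Rabs (b - th ^ 2) <= P ^ 2 * R) by (apply Rmult_le_compat; lra).
  lra.
Qed.

(* [(v + a ^ 2) (w + b ^ 2) - a ^ 2 b ^ 2] is the variance of a product of independent
   factors with means [a], [b] and variances [v], [w]. *)
Lemma prod_var_le_sparse (m th a b v w P R W M0 : R) :
  Rabs m <= P -> Rabs th <= P -> Rabs (a - m ^ 2) <= R -> Rabs (b - th ^ 2) <= R -> 0 <= M0 ->
  0 <= v <= W -> 0 <= w <= W -> (m = 0 -> a = 0 /\ v <= M0) -> (th = 0 -> b = 0 /\ w <= M0) ->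
  (v + a ^ 2) * (w + b ^ 2) - a ^ 2 * b ^ 2 <=
    M0 ^ 2 + M0 * (W + (P ^ 2 + R) ^ 2) * (nz_ind m + nz_ind th) +
    (W ^ 2 + 2 * W * (P ^ 2 + R) ^ 2) * nz_ind (m * th).
Proof.
  intros Hm Ht Ha Hb HM Hv Hw Hm0 Ht0.
  pose proof (sq_approx_le _ _ _ _ Hm Ha). pose proof (sq_approx_le _ _ _ _ Ht Hb).
  pose proof (pow2_ge_0 a). pose proof (pow2_ge_0 b).
  set (B := (P ^ 2 + R) ^ 2) in *. assert (0 <= B) by apply pow2_ge_0.
  replace ((v + a ^ 2) * (w + b ^ 2) - a ^ 2 * b ^ 2) with (v * w + v * b ^ 2 + w * a ^ 2) by ring.
  unfold nz_ind. destruct (Req_EM_T (m * th) 0) as [E3|E3].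
  - destruct (Req_EM_T m 0) as [E1|E1]; destruct (Req_EM_T th 0) as [E2|E2].
    + destruct (Hm0 E1) as [-> ?]. destruct (Ht0 E2) as [-> ?]. simpl. nra.
    + destruct (Hm0 E1) as [-> ?]. simpl. nra.
    + destruct (Ht0 E2) as [-> ?]. simpl. nra.
    + exfalso. apply Rmult_integral in E3. tauto.
  - destruct (Req_EM_T m 0) as [E1|E1]; [exfalso; apply E3; rewrite E1; ring|].
    destruct (Req_EM_T th 0) as [E2|E2]; [exfalso; apply E3; rewrite E2; ring|].
    nra.
Qed.

(** * The risk of the estimator *)

Definition coord_bias_bound (s T : R) : R := s ^ 2 * (1 + T).
Definition coord_var_bound (s p T : R) : R := 3 * (4 * p ^ 2 * s ^ 2 + 3 * s ^ 4 + s ^ 4 * T ^ 2).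

Lemma coord_bias_bound_nonneg s T : 0 <= T -> 0 <= coord_bias_bound s T.
Proof. intros; unfold coord_bias_bound. apply Rmult_le_pos; [apply pow2_ge_0|lra]. Qed.

Lemma coord_var_bound_nonneg s p T : 0 <= coord_var_bound s p T.
Proof.
  unfold coord_var_bound. pose proof (pow2_ge_0 (p * s)). pose proof (pow2_ge_0 (s ^ 2)).
  pose proof (pow2_ge_0 (s ^ 2 * T)). nra.
Qed.

Section Risk.
Variables (sigma : R) (n : nat) (mu0 p : R) (mu theta : nat -> R).
Hypothesis n_pos : (0 < n)%nat.
Hypothesis tau_nonneg : 0 <= tau n.
Hypothesis mu0_def : is_improper (fun t => phi t * pos_part ((sigma * t) ^ 2 - sigma ^ 2 * tau n)) mu0.
Hypothesis mu_bound : forall i, (i < n)%nat -> Rabs (mu i) <= p.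
Hypothesis theta_bound : forall i, (i < n)%nat -> Rabs (theta i) <= p.

Let mean (m : R) : R := thr_mean sigma (tau n) mu0 m.
Let var (m : R) : R := thr_var sigma (tau n) mu0 m.

Definition qhat2_bias : R :=
  / INR n * rsum n (fun i => mean (mu i) * mean (theta i)) - Qfun n mu theta.

Definition qhat2_var : R :=
  rsum n (fun i => (/ INR n) ^ 2 *
    (thr_sqmean sigma (tau n) mu0 (mu i) * thr_sqmean sigma (tau n) mu0 (theta i)
     - (mean (mu i) * mean (theta i)) ^ 2)).

Lemma qhat2_risk_eq : gauss_exp (2 * n)
  (fun z => (Qhat2 n sigma mu0 mu0 (obsX n sigma mu z) (obsY n sigma theta z) - Qfun n mu theta) ^ 2)
  (qhat2_bias ^ 2 + qhat2_var).
Proof.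
  eapply gauss_exp_ext;
    [|apply (gauss_exp_product_sq_error n n_pos (fun i => thr_stat sigma (tau n) mu0 (mu i))
                                        (fun i => thr_stat sigma (tau n) mu0 (theta i)))];
    intros; auto using thr_stat_quad_dominated, is_improper_thr_mean, is_improper_thr_sqmean.
Qed.

Let bias_le m : Rabs (mean m - m ^ 2) <= coord_bias_bound sigma (tau n).
Proof. apply thr_mean_bias; auto. Qed.

Lemma qhat2_bias_le :
  Rabs qhat2_bias <= / INR n * ((2 * p ^ 2 * coord_bias_bound sigma (tau n)
     + coord_bias_bound sigma (tau n) ^ 2) * INR (nnz n (fun i => mu i * theta i))).
Proof.
  assert (0 < INR n) by (apply lt_0_INR; lia).
  unfold qhat2_bias, Qfun. rewrite <- Rmult_minus_distr_l, rsum_minus.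
  rewrite Rabs_mult, (Rabs_right (/ INR n)) by (apply Rle_ge, Rlt_le, Rinv_0_lt_compat; auto).
  apply Rmult_le_compat_l; [apply Rlt_le, Rinv_0_lt_compat; auto|].
  apply abs_rsum_le_nnz.
  - intros i Hi H0. apply Rmult_integral in H0. unfold mean.
    destruct H0 as [-> | ->]; rewrite thr_mean_0 by auto; ring.
  - intros i Hi. apply prod_approx_err_le; auto using coord_bias_bound_nonneg, bias_le.
Qed.

Lemma qhat2_var_le M0 : var 0 <= M0 ->
  let R := coord_bias_bound sigma (tau n) in
  let W := coord_var_bound sigma p (tau n) in
  qhat2_var <= (/ INR n) ^ 2 * (INR n * M0 ^ 2 +
     M0 * (W + (p ^ 2 + R) ^ 2) * (INR (nnz n mu) + INR (nnz n theta)) +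
     (W ^ 2 + 2 * W * (p ^ 2 + R) ^ 2) * INR (nnz n (fun i => mu i * theta i))).
Proof.
  intros HM0 R W.
  assert (var_le : forall m, Rabs m <= p -> 0 <= var m <= W).
  { intros m Hm. split; [apply thr_var_nonneg; auto|].
    eapply Rle_trans; [apply thr_var_le; auto|].
    unfold W, coord_var_bound.
    assert (m ^ 2 * sigma ^ 2 <= p ^ 2 * sigma ^ 2).
    { apply Rmult_le_compat_r. apply pow2_ge_0. apply sq_le_sq_of_abs_le; auto. }
    lra. }
  unfold qhat2_var. rewrite rsum_scal. apply Rmult_le_compat_l; [apply pow2_ge_0|].
  assert (0 <= M0) by (eapply Rle_trans; [apply thr_var_nonneg; auto|]; eauto).
  apply Rle_trans with (rsum n (fun i => M0 ^ 2
     + M0 * (W + (p ^ 2 + R) ^ 2) * (nz_ind (mu i) + nz_ind (theta i))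
     + (W ^ 2 + 2 * W * (p ^ 2 + R) ^ 2) * nz_ind (mu i * theta i))).
  - apply rsum_le. intros i Hi.
    replace (thr_sqmean sigma (tau n) mu0 (mu i) * thr_sqmean sigma (tau n) mu0 (theta i)
             - (mean (mu i) * mean (theta i)) ^ 2)
      with ((var (mu i) + mean (mu i) ^ 2) * (var (theta i) + mean (theta i) ^ 2)
            - mean (mu i) ^ 2 * mean (theta i) ^ 2) by (unfold var, mean, thr_var; ring).
    apply prod_var_le_sparse; auto using var_le, bias_le.
    + intros E. rewrite E. unfold mean. rewrite thr_mean_0; auto.
    + intros E. rewrite E. unfold mean. rewrite thr_mean_0; auto.
  - rewrite !rsum_plus, !rsum_scal, rsum_const, rsum_plus, !rsum_nz_ind. lra.
Qed.

End Risk.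

(** * Asymptotics in the threshold [T = log n] *)

Section Asymptotics.
Variables s p T : R.
Hypothesis p_ge1 : 1 <= p.
Hypothesis T_ge1 : 1 <= T.
Hypothesis T_le : T <= p ^ 2.

Let R := coord_bias_bound s T.
Let W := coord_var_bound s p T.

Let R_bounds : 0 <= R <= 2 * s ^ 2 * T.
Proof. split; [apply coord_bias_bound_nonneg; lra|]. unfold R, coord_bias_bound. nra. Qed.

Let cV_nonneg : 0 <= 12 * s ^ 2 + 12 * s ^ 4.
Proof. nra. Qed.

Lemma bias_coef_bounds :
  0 <= 2 * p ^ 2 * R + R ^ 2 <= (4 * s ^ 2 + 4 * s ^ 4) * p ^ 2 * T.
Proof.
  pose proof R_bounds. pose proof (pow2_ge_0 p).
  assert (R ^ 2 <= 4 * s ^ 4 * T ^ 2) by nra.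
  assert (s ^ 4 * T ^ 2 <= s ^ 4 * (p ^ 2 * T)) by (apply Rmult_le_compat_l; nra).
  split; nra.
Qed.

Let sq_mean_bounds : 0 <= (p ^ 2 + R) ^ 2 <= (1 + 2 * s ^ 2) ^ 2 * p ^ 4.
Proof.
  pose proof R_bounds. split; [apply pow2_ge_0|].
  replace ((1 + 2 * s ^ 2) ^ 2 * p ^ 4) with (((1 + 2 * s ^ 2) * p ^ 2) ^ 2) by ring.
  apply pow_incr; nra.
Qed.

Let W_bounds : 0 <= W <= (12 * s ^ 2 + 12 * s ^ 4) * (p ^ 2 + T ^ 2).
Proof.
  split; [apply coord_var_bound_nonneg|]. unfold W, coord_var_bound.
  assert (1 <= p ^ 2) by nra. assert (0 <= s ^ 4) by nra. nra.
Qed.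

Lemma cross_coef_bounds : 0 <= W + (p ^ 2 + R) ^ 2 <=
  (2 * (12 * s ^ 2 + 12 * s ^ 4) + (1 + 2 * s ^ 2) ^ 2) * p ^ 4.
Proof.
  pose proof sq_mean_bounds. pose proof W_bounds. pose proof cV_nonneg.
  assert (p ^ 2 <= p ^ 4) by nra. assert (T ^ 2 <= p ^ 4) by nra.
  assert ((12 * s ^ 2 + 12 * s ^ 4) * (p ^ 2 + T ^ 2) <= (12 * s ^ 2 + 12 * s ^ 4) * (2 * p ^ 4))
    by (apply Rmult_le_compat_l; lra).
  split; nra.
Qed.

Lemma signal_coef_bounds : 0 <= W ^ 2 + 2 * W * (p ^ 2 + R) ^ 2 <=
  (2 * (12 * s ^ 2 + 12 * s ^ 4) ^ 2 + 2 * (12 * s ^ 2 + 12 * s ^ 4) * (1 + 2 * s ^ 2) ^ 2)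
  * (p ^ 6 + p ^ 4 * T ^ 2).
Proof.
  pose proof sq_mean_bounds. pose proof W_bounds. pose proof cV_nonneg.
  set (cV := 12 * s ^ 2 + 12 * s ^ 4) in *. set (cR := (1 + 2 * s ^ 2) ^ 2) in *.
  assert (0 <= cR) by (unfold cR; apply pow2_ge_0).
  assert (1 <= p ^ 2) by nra. assert (0 <= p ^ 4) by (apply pow_le; lra).
  assert (p ^ 4 <= p ^ 6) by (replace (p ^ 6) with (p ^ 4 * p ^ 2) by ring; nra).
  assert (T ^ 2 <= p ^ 4)
    by (replace (p ^ 4) with (p ^ 2 * p ^ 2) by ring; replace (T ^ 2) with (T * T) by ring;
        apply Rmult_le_compat; lra).
  assert (T ^ 2 * T ^ 2 <= p ^ 4 * T ^ 2) by (apply Rmult_le_compat_r; [apply pow2_ge_0|lra]).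
  assert (W ^ 2 <= cV ^ 2 * (p ^ 2 + T ^ 2) ^ 2).
  { replace (cV ^ 2 * (p ^ 2 + T ^ 2) ^ 2) with ((cV * (p ^ 2 + T ^ 2)) ^ 2) by ring.
    apply pow_incr; lra. }
  assert ((p ^ 2 + T ^ 2) ^ 2 <= 2 * (p ^ 6 + p ^ 4 * T ^ 2)) by nra.
  assert (W * (p ^ 2 + R) ^ 2 <= cV * (p ^ 2 + T ^ 2) * (cR * p ^ 4))
    by (apply Rmult_le_compat; lra).
  assert (cV ^ 2 * (p ^ 2 + T ^ 2) ^ 2 <= cV ^ 2 * (2 * (p ^ 6 + p ^ 4 * T ^ 2)))
    by (apply Rmult_le_compat_l; nra).
  assert (0 <= W * (p ^ 2 + R) ^ 2) by (apply Rmult_le_pos; lra).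
  split; nra.
Qed.

End Asymptotics.

Lemma exp_pow a k : exp a ^ k = exp (INR k * a).
Proof.
  induction k; simpl pow. rewrite Rmult_0_l, exp_0; reflexivity.
  rewrite IHk, S_INR, Rmult_comm, <- exp_plus. f_equal. ring.
Qed.

Lemma le_exp_sq_of_ge_inv_sq b T : 0 < b -> 1 / b ^ 2 <= T -> T <= exp (b * T) ^ 2.
Proof.
  intros Hb Tb. rewrite exp_pow.
  assert (1 + b * T <= exp (b * T)).
  { destruct (Req_dec (b * T) 0) as [E|E]. rewrite E, exp_0; lra. apply Rlt_le, exp_ineq1; auto. }
  assert (1 <= b ^ 2 * T).
  { apply Rmult_le_reg_r with (/ b ^ 2). apply Rinv_0_lt_compat; nra.
    replace (b ^ 2 * T * / b ^ 2) with T by (field; lra). unfold Rdiv in Tb. lra. }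
  assert (0 <= b * T) by nra.
  replace (INR 2 * (b * T)) with (b * T + b * T) by (simpl; ring). rewrite exp_plus. nra.
Qed.

Section RiskAsymptotics.
Variables ep be b T c0 cD cB c4 Nm Nt Nq D Bnd Bnd2 : R.
Hypothesis ep_pos : 0 < ep.
Hypothesis be_lt : be < 1 / 2.
Hypothesis b_pos : 0 < b.
Hypothesis T_nonneg : 0 <= T.
Hypothesis c0_nonneg : 0 <= c0.
Hypothesis Nm_bound : 0 <= Nm <= exp (be * T).
Hypothesis Nt_bound : 0 <= Nt <= exp (be * T).
Hypothesis Nq_bound : 0 <= Nq <= exp (ep * T).
Hypothesis D_bound : 0 <= D <= cD * exp (b * T) ^ 2 * T.
Hypothesis Bnd_bound : 0 <= Bnd <= cB * exp (b * T) ^ 4.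
Hypothesis Bnd2_bound : 0 <= Bnd2 <= c4 * (exp (b * T) ^ 6 + exp (b * T) ^ 4 * T ^ 2).

Let cB_nonneg : 0 <= cB.
Proof. pose proof (pow_lt _ 4 (exp_pos (b * T))). destruct Bnd_bound. nra. Qed.

Let c4_nonneg : 0 <= c4.
Proof.
  pose proof (pow_lt _ 6 (exp_pos (b * T))). pose proof (pow_lt _ 4 (exp_pos (b * T))).
  pose proof (pow2_ge_0 T). destruct Bnd2_bound.
  assert (0 < exp (b * T) ^ 6 + exp (b * T) ^ 4 * T ^ 2) by nra. nra.
Qed.

Let A := exp ((2 * ep + 4 * b - 2) * T) * T ^ 2.
Let B := exp ((ep + 6 * b - 2) * T).
Let M0 := c0 * exp (- ((1 - ep) / 2) * T).

Let bias_term_le : (/ exp T * (D * Nq)) ^ 2 <= cD ^ 2 * A.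
Proof.
  unfold A. rewrite exp_pow in D_bound.
  assert (0 <= / exp T) by (apply Rlt_le, Rinv_0_lt_compat, exp_pos).
  assert (/ exp T * (D * Nq) <= cD * T * exp ((2 * b + ep - 1) * T)).
  { apply Rle_trans with (/ exp T * ((cD * exp (INR 2 * (b * T)) * T) * exp (ep * T))).
    { apply Rmult_le_compat_l; auto. apply Rmult_le_compat; lra. }
    rewrite <- exp_Ropp.
    replace (exp (- T) * (cD * exp (INR 2 * (b * T)) * T * exp (ep * T)))
      with (cD * T * (exp (- T) * exp (INR 2 * (b * T)) * exp (ep * T))) by ring.
    rewrite <- !exp_plus. apply Req_le. f_equal. f_equal. simpl; ring. }
  assert (0 <= / exp T * (D * Nq)) by (apply Rmult_le_pos; [auto|apply Rmult_le_pos; lra]).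
  apply Rle_trans with ((cD * T * exp ((2 * b + ep - 1) * T)) ^ 2). apply pow_incr; lra.
  replace ((cD * T * exp ((2 * b + ep - 1) * T)) ^ 2)
    with (cD ^ 2 * T ^ 2 * exp ((2 * b + ep - 1) * T) ^ 2) by ring.
  rewrite exp_pow. replace (INR 2 * ((2 * b + ep - 1) * T)) with ((2 * ep + 4 * b - 2) * T)
    by (simpl; ring).
  lra.
Qed.

Let null_var_term_le : (/ exp T) ^ 2 * (exp T * M0 ^ 2) <= c0 ^ 2 * B.
Proof.
  unfold B, M0.
  replace ((/ exp T) ^ 2 * (exp T * (c0 * exp (- ((1 - ep) / 2) * T)) ^ 2))
    with (c0 ^ 2 * (/ exp T * / exp T * exp T * exp (- ((1 - ep) / 2) * T) ^ 2)) by ring.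
  apply Rmult_le_compat_l. nra.
  rewrite exp_pow, <- !exp_Ropp, <- !exp_plus. apply exp_le_exp_of_le. simpl INR. nra.
Qed.

Let cross_var_term_le : (/ exp T) ^ 2 * (M0 * Bnd * (Nm + Nt)) <= 2 * c0 * cB * B.
Proof.
  unfold B, M0. rewrite exp_pow in Bnd_bound.
  assert (0 <= (/ exp T) ^ 2) by apply pow2_ge_0.
  assert (0 <= c0 * exp (- ((1 - ep) / 2) * T)) by (apply Rmult_le_pos; [lra|apply Rlt_le, exp_pos]).
  apply Rle_trans with ((/ exp T) ^ 2 * (c0 * exp (- ((1 - ep) / 2) * T)
                          * (cB * exp (INR 4 * (b * T))) * (2 * exp (be * T)))).
  - apply Rmult_le_compat_l; auto. apply Rmult_le_compat; try lra.
    apply Rmult_le_pos; lra. apply Rmult_le_compat_l; lra.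
  - replace ((/ exp T) ^ 2 * (c0 * exp (- ((1 - ep) / 2) * T) * (cB * exp (INR 4 * (b * T)))
               * (2 * exp (be * T))))
      with (2 * c0 * cB * (/ exp T * / exp T * exp (- ((1 - ep) / 2) * T)
               * exp (INR 4 * (b * T)) * exp (be * T))) by ring.
    apply Rmult_le_compat_l. nra.
    rewrite <- !exp_Ropp, <- !exp_plus. apply exp_le_exp_of_le. simpl INR. nra.
Qed.

Let signal_var_term_le : (/ exp T) ^ 2 * (Bnd2 * Nq) <= c4 * (B + A).
Proof.
  unfold A, B. rewrite !exp_pow in Bnd2_bound.
  assert (0 <= (/ exp T) ^ 2) by apply pow2_ge_0.
  assert (0 <= exp (INR 6 * (b * T)) + exp (INR 4 * (b * T)) * T ^ 2)
    by (pose proof (exp_pos (INR 6 * (b * T))); pose proof (exp_pos (INR 4 * (b * T)));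
        pose proof (pow2_ge_0 T); nra).
  apply Rle_trans with ((/ exp T) ^ 2 * (c4 * (exp (INR 6 * (b * T))
                          + exp (INR 4 * (b * T)) * T ^ 2) * exp (ep * T))).
  - apply Rmult_le_compat_l; auto. apply Rmult_le_compat; lra.
  - replace ((/ exp T) ^ 2 * (c4 * (exp (INR 6 * (b * T)) + exp (INR 4 * (b * T)) * T ^ 2)
               * exp (ep * T)))
      with (c4 * ((/ exp T * / exp T * exp (INR 6 * (b * T)) * exp (ep * T))
                  + (/ exp T * / exp T * exp (INR 4 * (b * T)) * exp (ep * T)) * T ^ 2)) by ring.
    apply Rmult_le_compat_l; auto. rewrite <- !exp_Ropp, <- !exp_plus. simpl INR.
    apply Rplus_le_compat.
    + apply exp_le_exp_of_le; nra.
    + apply Rmult_le_compat_r. apply pow2_ge_0. apply exp_le_exp_of_le; nra.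
Qed.

Lemma risk_terms_le : (/ exp T * (D * Nq)) ^ 2 +
   (/ exp T) ^ 2 * (exp T * M0 ^ 2 + M0 * Bnd * (Nm + Nt) + Bnd2 * Nq) <=
   (cD ^ 2 + c0 ^ 2 + 2 * c0 * cB + c4) * (A + B).
Proof.
  assert (0 <= A) by (unfold A; apply Rmult_le_pos; [apply Rlt_le, exp_pos|apply pow2_ge_0]).
  assert (0 <= B) by (unfold B; apply Rlt_le, exp_pos).
  assert (0 <= cD ^ 2) by apply pow2_ge_0. assert (0 <= c0 ^ 2) by apply pow2_ge_0.
  assert (0 <= c0 * cB) by (apply Rmult_le_pos; lra).
  pose proof bias_term_le. pose proof null_var_term_le.
  pose proof cross_var_term_le. pose proof signal_var_term_le.
  nra.
Qed.

End RiskAsymptotics.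

Definition null_var_const (eps sigma : R) : R :=
  sigma ^ 4 * (4 / ((1 - eps) / 2) ^ 2) * chi2_mgf ((1 - eps) / 2).

Definition risk_const (eps sigma : R) : R :=
  let cV := 12 * sigma ^ 2 + 12 * sigma ^ 4 in
  let cR := (1 + 2 * sigma ^ 2) ^ 2 in
  (4 * sigma ^ 2 + 4 * sigma ^ 4) ^ 2 + null_var_const eps sigma ^ 2
  + 2 * null_var_const eps sigma * (2 * cV + cR) + (2 * cV ^ 2 + 2 * cV * cR).

Lemma null_var_const_nonneg eps sigma : 0 < eps < 1 -> 0 <= null_var_const eps sigma.
Proof.
  intros He. unfold null_var_const. apply Rmult_le_pos; [|apply chi2_mgf_nonneg; lra].
  apply Rmult_le_pos. replace (sigma ^ 4) with ((sigma ^ 2) ^ 2) by ring. apply pow2_ge_0.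
  apply Rlt_le, Rdiv_lt_0_compat; nra.
Qed.

Lemma risk_const_pos eps sigma : 0 < eps < 1 -> 0 < sigma -> 0 < risk_const eps sigma.
Proof.
  intros He Hs. pose proof (null_var_const_nonneg eps sigma He). unfold risk_const.
  assert (0 < (4 * sigma ^ 2 + 4 * sigma ^ 4) ^ 2) by (apply pow_lt; nra).
  assert (0 <= null_var_const eps sigma ^ 2) by apply pow2_ge_0.
  assert (0 <= 12 * sigma ^ 2 + 12 * sigma ^ 4) by nra.
  assert (0 <= (1 + 2 * sigma ^ 2) ^ 2) by apply pow2_ge_0.
  assert (0 <= (12 * sigma ^ 2 + 12 * sigma ^ 4) ^ 2) by apply pow2_ge_0.
  nra.
Qed.

Lemma qhat2_risk_le (beta eps b sigma : R) (n : nat) (mu0 : R) (mu theta : nat -> R) :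
  0 < eps -> eps <= beta -> beta < 1 / 2 -> 0 < b -> 0 < sigma -> (0 < n)%nat ->
  1 <= tau n -> 1 / b ^ 2 <= tau n ->
  is_improper (fun t => phi t * pos_part ((sigma * t) ^ 2 - sigma ^ 2 * tau n)) mu0 ->
  Omega n beta eps b mu theta ->
  exists L : R,
    gauss_exp (2 * n)
      (fun z => (Qhat2 n sigma mu0 mu0 (obsX n sigma mu z) (obsY n sigma theta z)
                 - Qfun n mu theta) ^ 2) L /\
    L <= risk_const eps sigma * (Rpower (INR n) (2 * eps + 4 * b - 2) * (ln (INR n)) ^ 2
                                 + Rpower (INR n) (eps + 6 * b - 2)).
Proof.
  intros Heps Hepsbe Hbe Hb Hs Hn T1 Tb Hmu0 [Hnm [Hmub [Hnt [Htb Hnq]]]].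
  unfold Rpower in *. fold (tau n) in *.
  set (T := tau n) in *. set (p := exp (b * T)) in *.
  assert (ExpT : exp T = INR n) by (apply exp_ln, lt_0_INR; lia).
  assert (p1 : 1 <= p) by (rewrite <- exp_0; apply exp_le_exp_of_le; nra).
  assert (Tp : T <= p ^ 2) by (apply le_exp_sq_of_ge_inv_sq; auto).
  assert (T0 : 0 <= T) by lra.
  exists (qhat2_bias sigma n mu0 mu theta ^ 2 + qhat2_var sigma n mu0 mu theta).
  split; [apply qhat2_risk_eq; auto|].
  eapply Rle_trans; [apply Rplus_le_compat|].
  - apply sq_le_sq_of_abs_le. apply (qhat2_bias_le sigma n mu0 p); auto.
  - apply (qhat2_var_le sigma n mu0 p mu theta); auto.
    apply (thr_var_0_le sigma T mu0) with (lam := (1 - eps) / 2); auto; split; lra.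
  - rewrite <- ExpT. change (tau n) with T.
    apply (risk_terms_le eps beta b T); auto using pos_INR.
    + apply null_var_const_nonneg; lra.
    + apply bias_coef_bounds; auto.
    + apply cross_coef_bounds; auto.
    + apply signal_coef_bounds; auto.
Qed.

Theorem theorem1 (beta eps b sigma : R) :
  0 < eps -> eps <= beta -> beta < 1 / 2 -> 0 < b -> 0 < sigma ->
  exists C : R, 0 < C /\
  exists N : nat, forall n : nat, (N <= n)%nat ->
  forall mu0 : R,
    improper_int (fun z => phi z * pos_part ((sigma * z) ^ 2 - sigma ^ 2 * tau n)) mu0 ->
  forall mu theta : nat -> R, Omega n beta eps b mu theta ->
    exists L : R,
      gauss_exp (2 * n)
        (fun z => (Qhat2 n sigma mu0 mu0 (obsX n sigma mu z) (obsY n sigma theta z)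
                   - Qfun n mu theta) ^ 2) L /\
      L <= C * (Rpower (INR n) (2 * eps + 4 * b - 2) * (ln (INR n)) ^ 2
                + Rpower (INR n) (eps + 6 * b - 2)).
Proof.
  intros Heps Hepsbe Hbe Hb Hs.
  exists (risk_const eps sigma). split; [apply risk_const_pos; lra|].
  destruct (INR_unbounded (exp (1 / b ^ 2))) as [N1 HN1].
  exists (max 3 N1). intros n Hn mu0 Hmu0 mu theta Hom.
  assert (3 <= INR n) by (replace 3 with (INR 3) by (simpl; ring); apply le_INR; lia).
  assert (INR N1 <= INR n) by (apply le_INR; lia).
  apply qhat2_risk_le with beta; auto.
  - lia.
  - unfold tau. rewrite <- (ln_exp 1). apply ln_le; [apply exp_pos|]. pose proof exp_le_3. lra.
  - unfold tau. rewrite <- (ln_exp (1 / b ^ 2)). apply ln_le; [apply exp_pos|lra].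
  - apply is_improper_of_improper_int, Hmu0.
Qed.
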